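(* Let $(a_n)_{n\ge 1}$ be complex numbers and let $\sigma$ be the (finite) abscissa of absolute convergence of $\sum_{n\ge1} a_n n^{-s}$, i.e. $\sum |a_n| n^{-s}$ converges for real $s>\sigma$ and diverges for real $s<\sigma$; let $f(s)=\sum a_n n^{-s}$ for $\Re(s)>\sigma$. Let $c>0$ be real with $c>\sigma$, and let $R_c(x) = \sum_{k=1}^\infty (-1)^{k+1} f(ck)\,x^k/(k-1)!$. Then for every complex $s$ with $-1 < \Re(s) < -\sigma/c$, $$\int_0^\infty R_c(x)\,x^{s-1}\,dx = f(-cs)\,\Gamma(s+1),$$ the integral converging absolutely. *)

From Stdlib Require Import Arith Reals Lra ClassicalEpsilon.
Open Scope R_scope.

Definition Cpx := (R * R)%type.
Definition Re (z : Cpx) : R := fst z.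
Definition Im (z : Cpx) : R := snd z.
Definition RtoC (x : R) : Cpx := (x, 0).
Definition Cadd (z w : Cpx) : Cpx := (Re z + Re w, Im z + Im w).
Definition Copp (z : Cpx) : Cpx := (- Re z, - Im z).
Definition Cmul (z w : Cpx) : Cpx :=
  (Re z * Re w - Im z * Im w, Re z * Im w + Im z * Re w).
Definition Cnorm (z : Cpx) : R := sqrt (Re z * Re z + Im z * Im z).
Definition Cexp (z : Cpx) : Cpx := (exp (Re z) * cos (Im z), exp (Re z) * sin (Im z)).
Definition Rcpow (x : R) (z : Cpx) : Cpx := Cexp (Cmul z (RtoC (ln x))).

Definition Csum (u : nat -> Cpx) (N : nat) : Cpx :=
  (sum_f_R0 (fun k => Re (u k)) N, sum_f_R0 (fun k => Im (u k)) N).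
Definition Cseries_cv (u : nat -> Cpx) (l : Cpx) : Prop :=
  Un_cv (fun N => Re (Csum u N)) (Re l) /\ Un_cv (fun N => Im (Csum u N)) (Im l).
(** the sum of a convergent series (an arbitrary value if it diverges) *)
Definition Cseries (u : nat -> Cpx) : Cpx :=
  epsilon (inhabits (0, 0)) (fun l => Cseries_cv u l).

Definition dirichlet (a : nat -> Cpx) (s : Cpx) : Cpx :=
  Cseries (fun k => Cmul (a (S k)) (Rcpow (INR (S k)) (Copp s))).

(** R_c(x) = sum_{k>=1} (-1)^{k+1} f(ck) x^k/(k-1)! ; summation index j = k-1 *)
Definition Rc (a : nat -> Cpx) (c : R) (x : R) : Cpx :=
  Cseries (fun j =>
    let k := S j in
    Cmul (RtoC ((-1) ^ (k + 1) * x ^ k / INR (fact (k - 1))))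
         (dirichlet a (RtoC (c * INR k)))).

Definition RInt_is (f : R -> R) (a b v : R) : Prop :=
  exists pr : Riemann_integrable f a b, RiemannInt pr = v.

(** [ImpInt_abs g v]: g : (0,oo) -> Cpx is Riemann integrable on every
    [a,b] with 0 < a <= b, int_0^oo |g| < oo, and int_a^b g -> v as
    a -> 0+, b -> +oo. *)
Definition ImpInt_abs (g : R -> Cpx) (v : Cpx) : Prop :=
  (forall a b, 0 < a -> a <= b ->
     exists vr vi vn, RInt_is (fun x => Re (g x)) a b vr /\
                      RInt_is (fun x => Im (g x)) a b vi /\
                      RInt_is (fun x => Cnorm (g x)) a b vn)
  /\ (exists M, forall a b vn, 0 < a -> a <= b ->
        RInt_is (fun x => Cnorm (g x)) a b vn -> vn <= M)
  /\ (forall eps, 0 < eps -> exists d B, 0 < d /\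
        forall a b vr vi, 0 < a -> a < d -> B < b ->
          RInt_is (fun x => Re (g x)) a b vr ->
          RInt_is (fun x => Im (g x)) a b vi ->
          Rabs (vr - Re v) < eps /\ Rabs (vi - Im v) < eps).

Definition CGamma (z : Cpx) : Cpx :=
  epsilon (inhabits (0, 0))
    (fun v => ImpInt_abs (fun t => Cmul (Rcpow t (Cadd z (RtoC (-1)))) (RtoC (exp (- t)))) v).

(** Expanding [f(ck) = sum_n a_n n^(-ck)] and exchanging the two
    (absolutely convergent) sums gives
    [R_c(x) = sum_n a_n phi(x n^(-c))] with [phi(y) = y e^(-y)].  The
    substitution [t = x n^(-c)] turns [int phi(x n^(-c)) x^(s-1) dx] into
    [n^(cs) int t^s e^(-t) dt], and summing over [n] (dominated convergence
    for series, the majorant being [|a_n| n^(c Re s)] times a bound on the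
    truncated Gamma integrals) gives [f(-cs) Gamma(s+1)]. *)

From Pilot Require Import Defs.
From Stdlib Require Import Arith Reals Lra Lia Psatz ClassicalEpsilon.
From Coquelicot Require Import Coquelicot.
Import Defs.
Open Scope R_scope.

Lemma Cpx_eq (z w : Cpx) : Re z = Re w -> Im z = Im w -> z = w.
Proof. destruct z, w; unfold Re, Im; simpl; intros -> ->; reflexivity. Qed.

(** [Cnorm] is Coquelicot's modulus [Cmod], which gives the triangle inequality. *)
Lemma Cnorm_Cmod (z : Cpx) : Cnorm z = Cmod z.
Proof. unfold Cnorm, Cmod, Re, Im. f_equal. ring. Qed.

Lemma Cnorm_ge0 (z : Cpx) : 0 <= Cnorm z.
Proof. apply sqrt_pos. Qed.

Lemma Re_le_Cnorm (z : Cpx) : Rabs (Re z) <= Cnorm z.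
Proof.
  unfold Cnorm. rewrite <- sqrt_Rsqr_abs. apply sqrt_le_1_alt. unfold Rsqr. nra.
Qed.

Lemma Im_le_Cnorm (z : Cpx) : Rabs (Im z) <= Cnorm z.
Proof.
  unfold Cnorm. rewrite <- sqrt_Rsqr_abs. apply sqrt_le_1_alt. unfold Rsqr. nra.
Qed.

Lemma Cnorm_triangle (z w : Cpx) : Cnorm (Cadd z w) <= Cnorm z + Cnorm w.
Proof. rewrite !Cnorm_Cmod. apply Cmod_triangle. Qed.

Lemma Cnorm_RtoC (x : R) : Cnorm (RtoC x) = Rabs x.
Proof.
  unfold Cnorm, RtoC, Re, Im; simpl.
  rewrite Rmult_0_l, Rplus_0_r. apply sqrt_Rsqr_abs.
Qed.

Lemma Cnorm_le_sum (z : Cpx) : Cnorm z <= Rabs (Re z) + Rabs (Im z).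
Proof.
  replace z with (Cadd (RtoC (Re z)) (0, Im z))
    by (apply Cpx_eq; unfold Cadd, RtoC, Re, Im; simpl; ring).
  eapply Rle_trans. apply Cnorm_triangle.
  rewrite Cnorm_RtoC. unfold Cnorm, Re, Im; simpl.
  rewrite Rmult_0_l, !Rplus_0_l, Rplus_0_r.
  change (snd z * snd z) with (Rsqr (snd z)). rewrite sqrt_Rsqr_abs. lra.
Qed.

Lemma Cnorm_mul (z w : Cpx) : Cnorm (Cmul z w) = Cnorm z * Cnorm w.
Proof.
  unfold Cnorm, Cmul, Re, Im; simpl. rewrite <- sqrt_mult by nra.
  f_equal. ring.
Qed.

(** [Cmul] and [RtoC] are definitionally Coquelicot's [Cmult] and [RtoC] on
    the field [C], so that identities between products can be proved with [ring]. *)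
Ltac to_C := repeat match goal with
  | |- context [Cmul ?a ?b] => change (Cmul a b) with (Cmult a b)
  | |- context [Defs.RtoC ?a] => change (Defs.RtoC a) with (Coquelicot.Complex.RtoC a)
  end.

Lemma Rcpow_eq (x : R) (z : Cpx) : Rcpow x z =
  (exp (Re z * ln x) * cos (Im z * ln x), exp (Re z * ln x) * sin (Im z * ln x)).
Proof.
  unfold Rcpow, Cexp, Cmul, RtoC, Re, Im; simpl.
  replace (fst z * ln x - snd z * 0) with (fst z * ln x) by ring.
  replace (fst z * 0 + snd z * ln x) with (snd z * ln x) by ring. reflexivity.
Qed.

Lemma Cnorm_Rcpow (x : R) (z : Cpx) : Cnorm (Rcpow x z) = exp (Re z * ln x).
Proof.
  rewrite Rcpow_eq. unfold Cnorm, Re, Im; simpl.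
  set (e := exp _). set (t := snd z * ln x).
  replace (e * cos t * (e * cos t) + e * sin t * (e * sin t))
    with (e * e * (Rsqr (sin t) + Rsqr (cos t))) by (unfold Rsqr; ring).
  rewrite (sin2_cos2 t), Rmult_1_r. apply sqrt_square. left; apply exp_pos.
Qed.

Lemma Rcpow_real (x r : R) : Rcpow x (RtoC r) = RtoC (exp (r * ln x)).
Proof.
  rewrite Rcpow_eq. unfold RtoC, Re, Im; simpl.
  rewrite Rmult_0_l, cos_0, sin_0. f_equal; ring.
Qed.

Lemma Rcpow_add (x : R) (z w : Cpx) : Rcpow x (Cadd z w) = Cmul (Rcpow x z) (Rcpow x w).
Proof.
  rewrite !Rcpow_eq. unfold Cadd, Cmul, Re, Im; simpl.
  replace ((fst z + fst w) * ln x) with (fst z * ln x + fst w * ln x) by ring.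
  replace ((snd z + snd w) * ln x) with (snd z * ln x + snd w * ln x) by ring.
  rewrite exp_plus, cos_plus, sin_plus. f_equal; ring.
Qed.

Lemma Rcpow_mulbase (x y : R) (z : Cpx) :
  0 < x -> 0 < y -> Rcpow (x * y) z = Cmul (Rcpow x z) (Rcpow y z).
Proof.
  intros Hx Hy. rewrite !Rcpow_eq, ln_mult by auto. unfold Cmul, Re, Im; simpl.
  replace (fst z * (ln x + ln y)) with (fst z * ln x + fst z * ln y) by ring.
  replace (snd z * (ln x + ln y)) with (snd z * ln x + snd z * ln y) by ring.
  rewrite exp_plus, cos_plus, sin_plus. f_equal; ring.
Qed.

Lemma Rcpow_opp_inv (x : R) (z : Cpx) : Cmul (Rcpow x (Copp z)) (Rcpow x z) = RtoC 1.
Proof.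
  rewrite <- Rcpow_add.
  replace (Cadd (Copp z) z) with (RtoC 0)
    by (apply Cpx_eq; unfold Cadd, Copp, RtoC, Re, Im; simpl; ring).
  rewrite Rcpow_real, Rmult_0_l, exp_0. reflexivity.
Qed.

Lemma is_series_lim (u : nat -> R) (l : R) :
  is_series u l <-> is_lim_seq (fun N => sum_f_R0 u N) l.
Proof.
  split; intro H.
  - apply is_lim_seq_ext with (u := sum_n u); [intro; apply sum_n_Reals | exact H].
  - apply is_lim_seq_ext with (v := sum_n u) in H; [exact H | intro; symmetry; apply sum_n_Reals].
Qed.

Lemma Series_ge0 (u : nat -> R) : ex_series u -> (forall n, 0 <= u n) -> 0 <= Series u.
Proof.
  intros Hu Hp. rewrite <- (Rmult_0_l (Series u)), <- Series_scal_l.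
  apply Series_le; auto. intro n; rewrite Rmult_0_l; split; [lra | apply Hp].
Qed.

Lemma sum_f_R0_ge0 (u : nat -> R) (N : nat) : (forall n, 0 <= u n) -> 0 <= sum_f_R0 u N.
Proof. intro Hp. induction N; simpl; [apply Hp | specialize (Hp (S N)); lra]. Qed.

Lemma partial_le_Series (u : nat -> R) (N : nat) :
  ex_series u -> (forall n, 0 <= u n) -> sum_f_R0 u N <= Series u.
Proof.
  intros Hu Hp. rewrite (Series_incr_n u (S N)) by (lia || auto).
  pose proof (Series_ge0 (fun k => u (S N + k)%nat)
                (proj1 (ex_series_incr_n u (S N)) Hu) (fun k => Hp _)).
  change (Init.Nat.pred (S N)) with N. lra.
Qed.

Lemma term_le_Series (u : nat -> R) (k : nat) :
  ex_series u -> (forall n, 0 <= u n) -> u k <= Series u.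
Proof.
  intros Hu Hp. eapply Rle_trans; [|apply (partial_le_Series u k Hu Hp)].
  destruct k; [simpl; lra|]. rewrite tech5. pose proof (sum_f_R0_ge0 u k Hp). lra.
Qed.

Lemma Series_tail_small (u : nat -> R) : ex_series u ->
  forall eps, 0 < eps -> exists N, forall n, (N <= n)%nat ->
    Rabs (Series (fun k => u (n + k)%nat)) < eps.
Proof.
  intros Hu eps Heps.
  pose proof (Series_correct u Hu) as H. apply is_series_lim, is_lim_seq_Reals in H.
  destruct (H eps Heps) as [N HN]. exists (S N). intros n Hn.
  rewrite (Series_incr_n u n) in HN by (lia || auto).
  specialize (HN (pred n) ltac:(lia)). unfold R_dist in HN.
  rewrite <- Rabs_Ropp. match goal with H : Rabs ?a < _ |- Rabs ?b < _ => replace b with a by ring end.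
  exact HN.
Qed.

Lemma ex_series_dominated (u v : nat -> R) :
  (forall n, Rabs (u n) <= v n) -> ex_series v -> ex_series u.
Proof. intros H Hv. apply (ex_series_le u v); auto. Qed.

Lemma Series_le_series (u v : nat -> R) :
  (forall n, u n <= v n) -> ex_series u -> ex_series v -> Series u <= Series v.
Proof.
  intros H Hu Hv.
  assert (0 <= Series (fun n => v n - u n)).
  { apply Series_ge0; [apply (ex_series_minus v u); auto | intro n; specialize (H n); lra]. }
  rewrite Series_minus in H0 by auto. lra.
Qed.

Lemma Series_abs_le (u v : nat -> R) :
  (forall n, Rabs (u n) <= v n) -> ex_series v -> Rabs (Series u) <= Series v.
Proof.
  intros H Hv.
  assert (Habs : ex_series (fun n => Rabs (u n))).
  { apply (ex_series_dominated _ v); auto. intro n; rewrite Rabs_Rabsolu; apply H. }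
  eapply Rle_trans. apply Series_Rabs; auto.
  apply Series_le_series; auto.
Qed.

(** This is the engine of all the limit interchanges below. *)
Lemma series_uniformly_small (M : nat -> R) : ex_series M ->
  forall eps, 0 < eps -> exists N delta, 0 < delta /\
    forall w : nat -> R, (forall k, 0 <= w k <= M k) ->
      (forall k, (k < N)%nat -> w k <= delta) -> Series w < eps.
Proof.
  intros HM eps Heps.
  destruct (Series_tail_small M HM (eps / 2) ltac:(lra)) as [K HK].
  set (N := S K). assert (HN : 0 < INR N) by (apply lt_0_INR; unfold N; lia).
  exists N, (eps / (2 * INR N)). split; [apply Rdiv_lt_0_compat; lra|].
  intros w Hw Hsmall.
  assert (Ew : ex_series w).
  { apply (ex_series_dominated w M); auto. intro k; rewrite Rabs_right; apply Hw || apply Rle_ge, Hw. }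
  rewrite (Series_incr_n w N) by (unfold N; lia || auto).
  assert (Hhead : sum_f_R0 w (pred N) <= eps / 2).
  { eapply Rle_trans. apply (sum_Rle _ (fun _ => eps / (2 * INR N))).
    - intros k Hk. apply Hsmall. unfold N in *; simpl in Hk; lia.
    - rewrite sum_cte. unfold N; simpl pred. fold N. right; field; lra. }
  assert (Htail : Series (fun k => w (N + k)%nat) < eps / 2).
  { eapply Rle_lt_trans. apply Series_le. intro k; apply Hw.
    apply ex_series_incr_n; auto.
    eapply Rle_lt_trans. apply RRle_abs. apply HK. unfold N; lia. }
  lra.
Qed.

Lemma eventually_forall_lt (P : nat -> nat -> Prop) (N : nat) :
  (forall k, exists m0, forall m, (m0 <= m)%nat -> P k m) ->
  exists m0, forall m, (m0 <= m)%nat -> forall k, (k < N)%nat -> P k m.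
Proof.
  intro H. induction N as [|N [m1 Hm1]].
  - exists O. intros; lia.
  - destruct (H N) as [m2 Hm2]. exists (max m1 m2). intros m Hm k Hk.
    destruct (Nat.eq_dec k N) as [->|Hne]; [apply Hm2 | apply Hm1]; lia.
Qed.

Lemma tannery (u : nat -> nat -> R) (M : nat -> R) :
  (forall m k, 0 <= u m k <= M k) -> ex_series M ->
  (forall k, is_lim_seq (fun m => u m k) 0) ->
  is_lim_seq (fun m => Series (u m)) 0.
Proof.
  intros Hb HM Hl. apply is_lim_seq_Reals. intros eps Heps.
  destruct (series_uniformly_small M HM eps Heps) as [N [delta [Hd Hsmall]]].
  destruct (eventually_forall_lt (fun k m => u m k <= delta) N) as [m0 Hm0].
  { intro k. destruct (proj1 (is_lim_seq_Reals _ _) (Hl k) delta Hd) as [m0 Hm0].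
    exists m0. intros m Hm. specialize (Hm0 m Hm). unfold R_dist in Hm0.
    rewrite Rminus_0_r in Hm0. eapply Rle_trans. apply RRle_abs. lra. }
  exists m0. intros m Hm. unfold R_dist. rewrite Rminus_0_r, Rabs_right.
  - apply Hsmall; [apply Hb | apply Hm0; auto].
  - apply Rle_ge, Series_ge0; [|intro; apply Hb].
    apply (ex_series_dominated _ M); auto. intro k; rewrite Rabs_right; apply Hb || apply Rle_ge, Hb.
Qed.

Lemma Series_tail_le (u : nat -> R) (n : nat) :
  ex_series u -> (forall k, 0 <= u k) -> Series (fun k => u (n + k)%nat) <= Series u.
Proof.
  intros Hu Hp. destruct n as [|n]; [right; apply Series_ext; reflexivity|].
  rewrite (Series_incr_n u (S n)) by (lia || auto).
  pose proof (sum_f_R0_ge0 u (pred (S n)) Hp). lra.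
Qed.

Lemma partial_sum_error (u : nat -> R) (J : nat) :
  ex_series (fun j => Rabs (u j)) ->
  Rabs (sum_f_R0 u J - Series u) <= Series (fun i => Rabs (u (S J + i)%nat)).
Proof.
  intro Habs. assert (Hu : ex_series u) by (apply ex_series_Rabs; auto).
  rewrite (Series_incr_n u (S J)) by (lia || auto). change (Init.Nat.pred (S J)) with J.
  replace (sum_f_R0 u J - (sum_f_R0 u J + Series (fun k => u (S J + k)%nat)))
    with (- Series (fun k => u (S J + k)%nat)) by ring.
  rewrite Rabs_Ropp. apply Series_abs_le; [intro; apply Rle_refl|].
  apply (ex_series_incr_n (fun j => Rabs (u j))); auto.
Qed.

Lemma fubini_R (b : nat -> nat -> R) (B r c : nat -> R) :
  (forall k, ex_series (fun j => Rabs (b j k))) ->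
  (forall k, Series (fun j => Rabs (b j k)) <= B k) -> ex_series B ->
  (forall j, is_series (fun k => b j k) (r j)) ->
  (forall k, is_series (fun j => b j k) (c k)) ->
  is_series r (Series c).
Proof.
  intros Hab HB HBe Hr Hc.
  set (T := fun J k => Series (fun i => Rabs (b (S J + i)%nat k))).
  assert (HT : forall J k, 0 <= T J k <= B k).
  { intros J k. unfold T. split.
    - apply Series_ge0; [apply (ex_series_incr_n (fun j => Rabs (b j k))); auto | intro; apply Rabs_pos].
    - eapply Rle_trans; [apply (Series_tail_le (fun j => Rabs (b j k)))|]; auto.
      intro; apply Rabs_pos. }
  assert (HTlim : is_lim_seq (fun J => Series (T J)) 0).
  { apply (tannery T B HT HBe). intro k. apply is_lim_seq_Reals. intros eps Heps.
    destruct (Series_tail_small _ (Hab k) eps Heps) as [N HN]. exists N. intros J HJ.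
    unfold R_dist, T. rewrite Rminus_0_r. apply HN. lia. }
  apply is_series_lim, is_lim_seq_Reals. apply is_lim_seq_Reals in HTlim.
  intros eps Heps. destruct (HTlim eps Heps) as [N HN]. exists N. intros J HJ.
  specialize (HN J HJ). unfold R_dist in *. rewrite Rminus_0_r in HN.
  assert (Hsum : is_series (fun k => sum_f_R0 (fun j => b j k) J) (sum_f_R0 r J)).
  { clear -Hr. induction J; simpl; [apply Hr | apply (is_series_plus _ _ _ _ IHJ (Hr (S J)))]. }
  assert (ET : ex_series (T J)).
  { apply (ex_series_dominated _ B); auto. intro k; rewrite Rabs_right; apply HT || apply Rle_ge, HT. }
  rewrite <- (is_series_unique _ _ Hsum), <- Series_minus; [| eexists; eauto | exists (Series c)].
  - rewrite Rabs_right in HN by (apply Rle_ge, Series_ge0; auto; intro; apply HT).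
    eapply Rle_lt_trans; [|exact HN]. apply Series_abs_le; auto. intro k.
    rewrite <- (is_series_unique _ _ (Hc k)). apply partial_sum_error, Hab.
  - apply Series_correct, (ex_series_dominated c B); auto. intro k.
    rewrite <- (is_series_unique _ _ (Hc k)). eapply Rle_trans; [apply Series_Rabs, Hab | apply HB].
Qed.

Definition CS (u : nat -> Cpx) (l : Cpx) : Prop :=
  is_series (fun n => Re (u n)) (Re l) /\ is_series (fun n => Im (u n)) (Im l).

Lemma CS_unique (u : nat -> Cpx) (l l' : Cpx) : CS u l -> CS u l' -> l = l'.
Proof.
  intros [H1 H2] [H3 H4]. apply Cpx_eq.
  - rewrite <- (is_series_unique _ _ H1). apply is_series_unique; auto.
  - rewrite <- (is_series_unique _ _ H2). apply is_series_unique; auto.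
Qed.

Lemma Cseries_eq (u : nat -> Cpx) (l : Cpx) : CS u l -> Cseries u = l.
Proof.
  assert (Hequiv : forall l, CS u l <-> Cseries_cv u l).
  { intro l0. unfold CS, Cseries_cv, Csum. simpl.
    rewrite !is_series_lim, !is_lim_seq_Reals. tauto. }
  intro H. unfold Cseries.
  assert (Ex : exists l0, Cseries_cv u l0) by (exists l; apply Hequiv; auto).
  apply (CS_unique u); auto. apply Hequiv, (epsilon_spec (inhabits (0, 0)) _ Ex).
Qed.

Lemma CS_ext (u v : nat -> Cpx) (l : Cpx) : (forall n, u n = v n) -> CS u l -> CS v l.
Proof.
  intros E [H1 H2]; split; eapply is_series_ext; try eassumption; intro n; simpl; rewrite E; reflexivity.
Qed.

Lemma CS_plus (u v : nat -> Cpx) (lu lv : Cpx) :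
  CS u lu -> CS v lv -> CS (fun n => Cadd (u n) (v n)) (Cadd lu lv).
Proof.
  intros [H1 H2] [H3 H4]; split; unfold Cadd, Re, Im in *; simpl;
  [apply (is_series_plus _ _ _ _ H1 H3) | apply (is_series_plus _ _ _ _ H2 H4)].
Qed.

Lemma CS_scal (z : Cpx) (u : nat -> Cpx) (l : Cpx) :
  CS u l -> CS (fun n => Cmul z (u n)) (Cmul z l).
Proof.
  assert (Hlin : forall (p q : nat -> R) lp lq x y, is_series p lp -> is_series q lq ->
            is_series (fun n => x * p n + y * q n) (x * lp + y * lq)).
  { intros p q lp lq x y Hp Hq.
    apply (is_series_plus (fun n => x * p n) (fun n => y * q n));
      [apply (is_series_scal x p lp Hp) | apply (is_series_scal y q lq Hq)]. }
  intros [H1 H2]; split; unfold Cmul, Re, Im in *; simpl.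
  - replace (fst z * fst l - snd z * snd l) with (fst z * fst l + - snd z * snd l) by ring.
    eapply is_series_ext; [|apply (Hlin _ _ _ _ (fst z) (- snd z) H1 H2)]. intro; simpl; ring.
  - eapply is_series_ext; [|apply (Hlin _ _ _ _ (fst z) (snd z) H2 H1)]. intro; simpl; ring.
Qed.

Lemma CS_scal_r (z : Cpx) (u : nat -> Cpx) (l : Cpx) :
  CS u l -> CS (fun n => Cmul (u n) z) (Cmul l z).
Proof.
  intro H. replace (Cmul l z) with (Cmul z l) by (apply Cpx_eq; unfold Cmul, Re, Im; simpl; ring).
  apply (CS_ext (fun n => Cmul z (u n))); [|apply CS_scal; auto].
  intro n; apply Cpx_eq; unfold Cmul, Re, Im; simpl; ring.
Qed.

Lemma CS_minus (u v : nat -> Cpx) (lu lv : Cpx) :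
  CS u lu -> CS v lv -> CS (fun n => Cadd (u n) (Copp (v n))) (Cadd lu (Copp lv)).
Proof.
  intros Hu Hv. apply CS_plus; auto.
  replace (Copp lv) with (Cmul (RtoC (-1)) lv)
    by (apply Cpx_eq; unfold Cmul, Copp, RtoC, Re, Im; simpl; ring).
  apply (CS_ext (fun n => Cmul (RtoC (-1)) (v n))); [|apply CS_scal; auto].
  intro n; apply Cpx_eq; unfold Cmul, Copp, RtoC, Re, Im; simpl; ring.
Qed.

Lemma Cnorm_Csum_le (u : nat -> Cpx) (N : nat) :
  Cnorm (Csum u N) <= sum_f_R0 (fun n => Cnorm (u n)) N.
Proof.
  induction N.
  - unfold Csum; simpl. destruct (u O); apply Req_le; reflexivity.
  - change (Csum u (S N)) with (Cadd (Csum u N) (u (S N))). simpl.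
    eapply Rle_trans; [apply Cnorm_triangle | lra].
Qed.

Lemma sum_f_R0_Csum (f : Cpx -> R) (Hadd : forall z w, f (Cadd z w) = f z + f w)
  (u : nat -> Cpx) (n : nat) : sum_f_R0 (fun k => f (u k)) n = f (Csum u n).
Proof.
  induction n.
  - simpl. unfold Csum, Re, Im; simpl. destruct (u O); reflexivity.
  - rewrite tech5, IHn. change (Csum u (S n)) with (Cadd (Csum u n) (u (S n))). rewrite Hadd. reflexivity.
Qed.

Lemma CS_abs (u : nat -> Cpx) : ex_series (fun n => Cnorm (u n)) ->
  exists l, CS u l /\ Cnorm l <= Series (fun n => Cnorm (u n)).
Proof.
  intros H.
  assert (E1 : ex_series (fun n => Re (u n)))
    by apply (ex_series_dominated _ _ (fun n => Re_le_Cnorm (u n)) H).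
  assert (E2 : ex_series (fun n => Im (u n)))
    by apply (ex_series_dominated _ _ (fun n => Im_le_Cnorm (u n)) H).
  set (l := (Series (fun n => Re (u n)), Series (fun n => Im (u n))) : Cpx).
  exists l. split; [split; apply Series_correct; auto|].
  set (M := Series (fun n => Cnorm (u n))).
  assert (HM : 0 <= M) by (apply Series_ge0; auto; intro; apply Cnorm_ge0).
  unfold Cnorm at 1. rewrite <- (sqrt_square M HM). apply sqrt_le_1_alt.
  (* the squared modulus of the limit is the limit of squared moduli *)
  pose proof (proj1 (is_series_lim _ _) (Series_correct _ E1)) as L1.
  pose proof (proj1 (is_series_lim _ _) (Series_correct _ E2)) as L2.
  pose proof (is_lim_seq_plus' _ _ _ _ (is_lim_seq_mult' _ _ _ _ L1 L1)
                (is_lim_seq_mult' _ _ _ _ L2 L2)) as L.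
  refine (is_lim_seq_le _ _ _ (Finite (M * M)) _ L (is_lim_seq_const _)).
  intro N. simpl.
  pose proof (Rle_trans _ _ _ (Cnorm_Csum_le u N)
                (partial_le_Series _ N H (fun n => Cnorm_ge0 _))) as HN.
  fold M in HN. pose proof (Cnorm_ge0 (Csum u N)).
  assert (Hsq : Cnorm (Csum u N) * Cnorm (Csum u N) <= M * M) by nra.
  unfold Cnorm in Hsq. rewrite sqrt_sqrt in Hsq; [exact Hsq | unfold Csum, Re, Im; simpl; nra].
Qed.

Lemma fubini_C (b : nat -> nat -> Cpx) (B : nat -> R) (r c : nat -> Cpx) :
  (forall k, ex_series (fun j => Cnorm (b j k))) ->
  (forall k, Series (fun j => Cnorm (b j k)) <= B k) -> ex_series B ->
  (forall j, CS (fun k => b j k) (r j)) ->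
  (forall k, CS (fun j => b j k) (c k)) ->
  exists L, CS r L /\ CS c L.
Proof.
  intros Hab HB HBe Hr Hc.
  (* each component of [b] satisfies the hypotheses of the real theorem *)
  assert (Hcomp : forall f : Cpx -> R, (forall z, Rabs (f z) <= Cnorm z) ->
     (forall k, is_series (fun j => f (b j k)) (f (c k))) ->
     (forall k, ex_series (fun j => Rabs (f (b j k)))) /\
     (forall k, Series (fun j => Rabs (f (b j k))) <= B k) /\
     ex_series (fun k => f (c k))).
  { intros f Hf Hfc.
    assert (Hex : forall k, ex_series (fun j => Rabs (f (b j k)))).
    { intro k. apply (ex_series_dominated _ (fun j => Cnorm (b j k))); auto.
      intro; rewrite Rabs_Rabsolu; auto. }
    assert (Hle : forall k, Series (fun j => Rabs (f (b j k))) <= B k).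
    { intro k. eapply Rle_trans; [|apply HB]. apply Series_le; auto.
      intro; split; auto using Rabs_pos. }
    split; [|split]; auto.
    apply (ex_series_dominated _ B); auto. intro k.
    rewrite <- (is_series_unique _ _ (Hfc k)). eapply Rle_trans; [apply Series_Rabs, Hex | apply Hle]. }
  destruct (Hcomp Re Re_le_Cnorm (fun k => proj1 (Hc k))) as [Hre1 [Hre2 Hre3]].
  destruct (Hcomp Im Im_le_Cnorm (fun k => proj2 (Hc k))) as [Him1 [Him2 Him3]].
  exists (Series (fun k => Re (c k)), Series (fun k => Im (c k))). split; split.
  - apply (fubini_R (fun j k => Re (b j k)) B); auto; intro; [apply Hr | apply Hc].
  - apply (fubini_R (fun j k => Im (b j k)) B); auto; intro; [apply Hr | apply Hc].
  - apply Series_correct; auto.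
  - apply Series_correct; auto.
Qed.

(** ** The series expansion of [R_c] *)

Lemma exp_le (x y : R) : x <= y -> exp x <= exp y.
Proof. intro H. destruct (Rle_lt_or_eq_dec _ _ H); [left; apply exp_increasing | subst]; lra. Qed.

Lemma ln_le (x y : R) : 0 < x -> x <= y -> ln x <= ln y.
Proof. intros Hx Hxy. destruct (Req_dec x y); [subst; lra | left; apply ln_increasing; lra]. Qed.

Lemma exp_INR_mul (n : nat) (x : R) : exp (INR n * x) = exp x ^ n.
Proof.
  induction n; [simpl; rewrite Rmult_0_l; apply exp_0|].
  rewrite S_INR. replace ((INR n + 1) * x) with (INR n * x + x) by ring.
  rewrite exp_plus, IHn. simpl. ring.
Qed.

Lemma exp_series (y : R) : is_series (fun i => / INR (fact i) * y ^ i) (exp y).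
Proof.
  apply is_series_Reals. unfold exp. destruct (exist_exp y) as [l Hl]. exact Hl.
Qed.

(** [lam c k = (k+1)^(-c)]: the frequencies of the Dirichlet series at [s = c]. *)
Definition lam (c : R) (k : nat) : R := exp (- c * ln (INR (S k))).

Lemma lam_pos (c : R) (k : nat) : 0 < lam c k.
Proof. apply exp_pos. Qed.

Lemma ln_lam (c : R) (k : nat) : ln (lam c k) = - c * ln (INR (S k)).
Proof. apply ln_exp. Qed.

Lemma lam_anti (c : R) (k K : nat) : 0 <= c -> (k <= K)%nat -> lam c K <= lam c k.
Proof.
  intros Hc H. unfold lam. apply exp_le.
  assert (ln (INR (S k)) <= ln (INR (S K))) by (apply ln_le; [apply lt_0_INR | apply le_INR]; lia).
  nra.
Qed.

Lemma lam_le1 (c : R) (k : nat) : 0 <= c -> lam c k <= 1.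
Proof.
  intro Hc. replace 1 with (lam c 0) by (unfold lam; simpl; rewrite ln_1, Rmult_0_r; apply exp_0).
  apply lam_anti; auto; lia.
Qed.

(** [phi y = y e^(-y)]: the kernel of [R_c]; indeed
    [R_c(x) = sum_k a_(k+1) phi (x (k+1)^(-c))]. *)
Definition phi (y : R) : R := y * exp (- y).

Lemma phi_bound (y : R) : 0 <= y -> 0 <= phi y <= y.
Proof.
  intro Hy. unfold phi. pose proof (exp_pos (- y)).
  assert (exp (- y) <= 1) by (rewrite <- exp_0; apply exp_le; lra). split; nra.
Qed.

(** The coefficient of [f(c(j+1))] in the definition of [R_c(x)]. *)
Definition coef (x : R) (j : nat) : R := (-1) ^ (S j + 1) * x ^ (S j) / INR (fact (S j - 1)).

Lemma coef_eq (x : R) (j : nat) : coef x j = (-1) ^ j * x ^ (S j) / INR (fact j).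
Proof.
  unfold coef. replace (S j - 1)%nat with j by lia. replace (S j + 1)%nat with (S (S j)) by lia.
  simpl. field. apply INR_fact_neq_0.
Qed.

Lemma phi_series (x l : R) : is_series (fun j => coef x j * l ^ (S j)) (phi (x * l)).
Proof.
  unfold phi. eapply is_series_ext; [|apply (is_series_scal (x * l) _ _ (exp_series (- (x * l))))].
  intro j. simpl. rewrite coef_eq. unfold scal; simpl; unfold mult; simpl.
  replace (- (x * l)) with ((-1) * (x * l)) by ring. rewrite !Rpow_mult_distr.
  field. apply INR_fact_neq_0.
Qed.

Lemma phi_abs_series (x l : R) : 0 <= x -> 0 <= l ->
  is_series (fun j => Rabs (coef x j) * l ^ (S j)) (x * l * exp (x * l)).
Proof.
  intros Hx Hl. eapply is_series_ext; [|apply (is_series_scal (x * l) _ _ (exp_series (x * l)))].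
  intro j. simpl. rewrite coef_eq. unfold scal; simpl; unfold mult; simpl.
  unfold Rdiv. rewrite !Rabs_mult, Rabs_inv, pow_1_abs.
  rewrite (Rabs_right (INR (fact j))), (Rabs_right x), (Rabs_right (x ^ j))
    by (apply Rle_ge; auto using pos_INR, pow_le).
  rewrite Rpow_mult_distr. ring.
Qed.

Lemma dirichlet_real_point (a : nat -> Cpx) (c : R) (j : nat) (D : Cpx) :
  CS (fun k => Cmul (a (S k)) (RtoC (lam c k ^ (S j)))) D ->
  dirichlet a (RtoC (c * INR (S j))) = D.
Proof.
  intro H. unfold dirichlet. apply Cseries_eq. eapply CS_ext; [|exact H].
  intro k. replace (Copp (RtoC (c * INR (S j)))) with (RtoC (- (c * INR (S j))))
    by (apply Cpx_eq; unfold Copp, RtoC, Re, Im; simpl; ring).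
  rewrite Rcpow_real. unfold lam. rewrite <- exp_INR_mul. do 3 f_equal. ring.
Qed.

Section Expansion.
Variables (a : nat -> Cpx) (c x : R).
Hypotheses (Hc : 0 < c) (Hx : 0 <= x).
Hypothesis Hser : ex_series (fun k => Cnorm (a (S k)) * lam c k).

Let term (j k : nat) : Cpx := Cmul (a (S k)) (RtoC (lam c k ^ (S j))).

Lemma dirichlet_points_cv (j : nat) : exists D, CS (fun k => term j k) D.
Proof.
  destruct (CS_abs (fun k => term j k)) as [D [HD _]]; [|exists D; exact HD].
  apply (ex_series_dominated _ (fun k => Cnorm (a (S k)) * lam c k)); auto.
  intro k. unfold term. rewrite Rabs_right, Cnorm_mul, Cnorm_RtoC by (apply Rle_ge, Cnorm_ge0).
  apply Rmult_le_compat_l; [apply Cnorm_ge0|].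
  pose proof (lam_pos c k). pose proof (lam_le1 c k ltac:(lra)).
  rewrite Rabs_right by (apply Rle_ge, pow_le; lra).
  assert (lam c k ^ j <= 1) by (rewrite <- (pow1 j); apply pow_incr; lra).
  simpl. nra.
Qed.

(** Interchanging the two summations in the definition of [R_c]. *)
Lemma Rc_expand : CS (fun k => Cmul (a (S k)) (RtoC (phi (x * lam c k)))) (Rc a c x).
Proof.
  pose proof (fun k => lam_pos c k) as Hl0.
  pose proof (fun k => lam_le1 c k ltac:(lra)) as Hl1.
  set (D := fun j => Cseries (fun k => term j k)).
  assert (HD : forall j, CS (fun k => term j k) (D j)).
  { intro j. destruct (dirichlet_points_cv j) as [Dj HDj]. unfold D. rewrite (Cseries_eq _ _ HDj). exact HDj. }
  set (b := fun j k => Cmul (RtoC (coef x j)) (term j k)).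
  assert (Hrow : forall k, is_series (fun j => Cnorm (b j k))
                   (Cnorm (a (S k)) * (x * lam c k * exp (x * lam c k)))).
  { intro k. eapply is_series_ext; [|apply (is_series_scal (Cnorm (a (S k))) _ _
                                      (phi_abs_series x (lam c k) Hx (Rlt_le _ _ (Hl0 k))))].
    intro j. unfold b, term. rewrite !Cnorm_mul, !Cnorm_RtoC.
    rewrite (Rabs_right (lam c k ^ S j)) by (apply Rle_ge, pow_le; left; auto).
    unfold scal; simpl; unfold mult; simpl. ring. }
  destruct (fubini_C b (fun k => Cnorm (a (S k)) * lam c k * (x * exp x))
              (fun j => Cmul (RtoC (coef x j)) (D j))
              (fun k => Cmul (a (S k)) (RtoC (phi (x * lam c k))))) as [L [HL1 HL2]].
  - intro k. eexists; apply Hrow.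
  - intro k. rewrite (is_series_unique _ _ (Hrow k)).
    assert (exp (x * lam c k) <= exp x) by (apply exp_le; specialize (Hl1 k); specialize (Hl0 k); nra).
    pose proof (Cnorm_ge0 (a (S k))). specialize (Hl0 k).
    assert (0 <= x * lam c k) by nra. pose proof (exp_pos (x * lam c k)).
    assert (x * lam c k * exp (x * lam c k) <= lam c k * (x * exp x)) by nra. nra.
  - apply (ex_series_scal_r (x * exp x) (fun k => Cnorm (a (S k)) * lam c k)), Hser.
  - intro j. apply CS_scal, HD.
  - intro k. eapply CS_ext; [|apply (CS_scal (a (S k)) (fun j => RtoC (coef x j * lam c k ^ S j)))].
    + intro j. unfold b, term. apply Cpx_eq; unfold Cmul, RtoC, Re, Im; simpl; ring.
    + split; [apply phi_series|]. unfold RtoC, Im; simpl.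
      apply is_series_lim. eapply is_lim_seq_ext; [|apply is_lim_seq_const].
      intro N. induction N; simpl; auto. rewrite <- IHN; ring.
  - replace (Rc a c x) with L; [exact HL2|].
    unfold Rc. symmetry. apply Cseries_eq. eapply CS_ext; [|exact HL1].
    intro j. simpl. f_equal. symmetry. apply dirichlet_real_point, HD.
Qed.

End Expansion.

Lemma RInt_is_iff (f : R -> R) (a b v : R) : RInt_is f a b v <-> is_RInt f a b v.
Proof.
  split.
  - intros [pr <-]. apply ex_RInt_Reals_aux_1.
  - intro H. exists (ex_RInt_Reals_0 f a b (ex_intro _ v H)).
    rewrite <- RInt_Reals. apply is_RInt_unique; auto.
Qed.

Lemma is_RInt_abs_le (f F : R -> R) (a b v w : R) : a <= b -> is_RInt f a b v -> is_RInt F a b w ->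
  (forall x, a <= x <= b -> Rabs (f x) <= F x) -> Rabs v <= w.
Proof. intros. apply (norm_RInt_le f F a b); auto. Qed.

Lemma is_RInt_bound (f : R -> R) (a b v M : R) : a <= b -> is_RInt f a b v ->
  (forall x, a <= x <= b -> Rabs (f x) <= M) -> Rabs v <= M * (b - a).
Proof. intros. rewrite Rmult_comm. apply (norm_RInt_le_const f a b); auto. Qed.

Lemma ex_RInt_pos_cont (f : R -> R) (a b : R) : 0 < a -> a <= b ->
  (forall x, 0 < x -> continuity_pt f x) -> ex_RInt f a b.
Proof.
  intros Ha Hab Hf. apply (ex_RInt_continuous (V := R_CompleteNormedModule)). intros z Hz.
  rewrite Rmin_left, Rmax_right in Hz by lra. apply continuity_pt_filterlim, Hf. lra.
Qed.

Lemma RInt_nonneg_mono (f : R -> R) (u' u v v' : R) :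
  (forall a b, 0 < a -> a <= b -> ex_RInt f a b) -> (forall x, 0 < x -> 0 <= f x) ->
  0 < u' -> u' <= u -> u <= v -> v <= v' -> RInt f u v <= RInt f u' v'.
Proof.
  intros Hi Hp H0 H1 H2 H3.
  assert (Hge : forall a b, 0 < a -> a <= b -> 0 <= RInt f a b)
    by (intros a b Ha Hab; apply RInt_ge_0; auto; intros; apply Hp; lra).
  rewrite <- (RInt_Chasles f u' v v'), <- (RInt_Chasles f u' u v); try apply Hi; try lra.
  pose proof (Hge u' u ltac:(lra) H1). pose proof (Hge v v' ltac:(lra) H3).
  unfold plus; simpl. lra.
Qed.

Definition CI (g : R -> Cpx) (a b : R) (v : Cpx) : Prop :=
  is_RInt (fun x => Re (g x)) a b (Re v) /\ is_RInt (fun x => Im (g x)) a b (Im v).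

Lemma CI_ext (g h : R -> Cpx) (a b : R) (v : Cpx) :
  (forall x, Rmin a b <= x <= Rmax a b -> g x = h x) -> CI g a b v -> CI h a b v.
Proof.
  intros E [H1 H2]. split; eapply is_RInt_ext; try eassumption; intros x Hx; cbv beta; rewrite E; auto; lra.
Qed.

Lemma CI_scal (z : Cpx) (g : R -> Cpx) (a b : R) (v : Cpx) :
  CI g a b v -> CI (fun x => Cmul z (g x)) a b (Cmul z v).
Proof.
  intros [H1 H2]. unfold Cmul, Re, Im in *; simpl in *. split; simpl.
  - apply (is_RInt_minus (V := R_NormedModule)); apply (is_RInt_scal (V := R_NormedModule)); auto.
  - apply (is_RInt_plus (V := R_NormedModule)); apply (is_RInt_scal (V := R_NormedModule)); auto.
Qed.

Lemma CI_comp_lin (g : R -> Cpx) (u a b : R) (v : Cpx) :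
  CI g (u * a) (u * b) v -> CI (fun y => Cmul (RtoC u) (g (u * y))) a b v.
Proof.
  assert (Hlin : forall f : R -> R, forall w, is_RInt f (u * a) (u * b) w ->
            is_RInt (fun y => u * f (u * y)) a b w).
  { intros f w Hf. rewrite <- (Rplus_0_r (u * a)), <- (Rplus_0_r (u * b)) in Hf.
    eapply is_RInt_ext; [|exact (is_RInt_comp_lin _ u 0 a b _ Hf)].
    intros x _. cbv beta. rewrite Rplus_0_r. reflexivity. }
  intros [H1 H2]. split.
  - eapply is_RInt_ext; [|exact (Hlin _ _ H1)]. intros x _. unfold Cmul, RtoC, Re, Im; simpl. ring.
  - eapply is_RInt_ext; [|exact (Hlin _ _ H2)]. intros x _. unfold Cmul, RtoC, Re, Im; simpl. ring.
Qed.

Lemma CI_finsum (g : nat -> R -> Cpx) (a b : R) (v : nat -> Cpx) (N : nat) :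
  (forall n, CI (g n) a b (v n)) -> CI (fun x => Csum (fun n => g n x) N) a b (Csum v N).
Proof.
  intro H. induction N; [unfold Csum; simpl; apply H|].
  destruct IHN as [I1 I2]. destruct (H (S N)) as [H1 H2].
  split; simpl; apply (is_RInt_plus (V := R_NormedModule)); auto.
Qed.

(** ** Absolutely convergent improper integrals over [(0, oo)] *)

Definition am (m : nat) : R := / INR (S m).
Definition bm (m : nat) : R := INR (S m).

Lemma am_pos (m : nat) : 0 < am m.
Proof. unfold am. apply Rinv_0_lt_compat, lt_0_INR; lia. Qed.

Lemma am_le_bm (m : nat) : am m <= bm m.
Proof.
  unfold am, bm. assert (H1 : 1 <= INR (S m)) by (rewrite S_INR; pose proof (pos_INR m); lra).
  assert (/ INR (S m) <= 1) by (rewrite <- Rinv_1; apply Rinv_le_contravar; lra). lra.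
Qed.

Lemma exhaustion_mono (n m : nat) : (n <= m)%nat -> am m <= am n /\ bm n <= bm m.
Proof.
  intro H. unfold am, bm. split; [apply Rinv_le_contravar; [apply lt_0_INR; lia|]|]; apply le_INR; lia.
Qed.

Lemma exhaustion_covers (a b : R) : 0 < a ->
  exists N, forall m, (N <= m)%nat -> am m <= a /\ b <= bm m.
Proof.
  intro Ha. destruct (INR_unbounded (Rmax b (/ a))) as [N HN].
  pose proof (Rmax_l b (/ a)). pose proof (Rmax_r b (/ a)).
  exists N. intros m Hm. assert (INR N <= INR (S m)) by (apply le_INR; lia).
  unfold am, bm. split; [|lra].
  rewrite <- (Rinv_inv a). apply Rinv_le_contravar; [apply Rinv_0_lt_compat|]; lra.
Qed.

Section ImproperIntegral.
Variables (g : R -> Cpx) (M : R).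
Hypothesis Hint : forall a b, 0 < a -> a <= b ->
  ex_RInt (fun x => Re (g x)) a b /\ ex_RInt (fun x => Im (g x)) a b /\
  ex_RInt (fun x => Cnorm (g x)) a b.
Hypothesis Hbnd : forall a b, 0 < a -> a <= b -> RInt (fun x => Cnorm (g x)) a b <= M.

Let P (a b : R) : R := RInt (fun x => Cnorm (g x)) a b.

Lemma P_mono (a' a b b' : R) : 0 < a' -> a' <= a -> a <= b -> b <= b' -> P a b <= P a' b'.
Proof.
  intros. apply RInt_nonneg_mono; auto; [apply Hint | intros; apply Cnorm_ge0].
Qed.

Lemma nested_estimate (f : Cpx -> R) (Hf : forall z, Rabs (f z) <= Cnorm z)
  (Hfi : forall a b, 0 < a -> a <= b -> ex_RInt (fun x => f (g x)) a b) (a' a b b' : R) :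
  0 < a' -> a' <= a -> a <= b -> b <= b' ->
  Rabs (RInt (fun x => f (g x)) a b - RInt (fun x => f (g x)) a' b') <= P a' b' - P a b.
Proof.
  intros H0 H1 H2 H3. set (F u v := RInt (fun x => f (g x)) u v).
  assert (Habs : forall u v, 0 < u -> u <= v -> Rabs (F u v) <= P u v).
  { intros u v Hu Huv. apply (is_RInt_abs_le (fun x => f (g x)) (fun x => Cnorm (g x)) u v);
      auto; apply (RInt_correct (V := R_CompleteNormedModule)); [apply Hfi | apply Hint]; auto. }
  assert (CF : F a' b' = F a' a + F a b + F b b').
  { unfold F. rewrite <- (RInt_Chasles _ a' b b'), <- (RInt_Chasles _ a' a b); try apply Hfi; try lra.
    reflexivity. }
  assert (CP : P a' b' = P a' a + P a b + P b b').
  { unfold P. rewrite <- (RInt_Chasles _ a' b b'), <- (RInt_Chasles _ a' a b); try apply Hint; try lra.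
    reflexivity. }
  fold (F a b) (F a' b'). rewrite CF, CP.
  replace (F a b - (F a' a + F a b + F b b')) with (- (F a' a + F b b')) by ring.
  rewrite Rabs_Ropp. eapply Rle_trans; [apply Rabs_triang|].
  pose proof (Habs a' a H0 H1). pose proof (Habs b b' ltac:(lra) H3). lra.
Qed.

Lemma P_sup : exists Pinf, (forall a b, 0 < a -> a <= b -> P a b <= Pinf) /\
  forall eps, 0 < eps -> exists N, Pinf - eps < P (am N) (bm N).
Proof.
  set (p m := P (am m) (bm m)).
  assert (Hgrow : Un_growing p).
  { intro n. destruct (exhaustion_mono n (S n) ltac:(lia)).
    apply P_mono; auto using am_pos, am_le_bm. }
  destruct (growing_cv p Hgrow) as [Pinf HPinf].
  { exists M. intros x [m ->]. apply Hbnd; auto using am_pos, am_le_bm. }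
  exists Pinf. split.
  - intros a b Ha Hab. destruct (exhaustion_covers a b Ha) as [N HN]. destruct (HN N (le_n N)).
    eapply Rle_trans; [|apply (growing_ineq p Pinf Hgrow HPinf N)]. pose proof (am_pos N). apply P_mono; lra.
  - intros eps Heps. destruct (HPinf eps Heps) as [N HN]. exists N.
    specialize (HN N (le_n N)). unfold R_dist in HN. apply Rabs_def2 in HN. unfold p in HN. lra.
Qed.

Lemma component_limit (f : Cpx -> R) (Hf : forall z, Rabs (f z) <= Cnorm z)
  (Hfi : forall a b, 0 < a -> a <= b -> ex_RInt (fun x => f (g x)) a b) :
  exists l, forall eps, 0 < eps -> exists N, forall a b, 0 < a -> a <= am N -> bm N <= b ->
    Rabs (RInt (fun x => f (g x)) a b - l) < eps.
Proof.
  destruct P_sup as [Pinf [Hub Happrox]].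
  set (q m := RInt (fun x => f (g x)) (am m) (bm m)).
  assert (Hnear : forall a b m, 0 < a -> a <= b -> am m <= a -> b <= bm m ->
             Rabs (RInt (fun x => f (g x)) a b - q m) <= Pinf - P a b).
  { intros a b m Ha Hab H1 H2. eapply Rle_trans.
    - apply nested_estimate; auto using am_pos.
    - pose proof (Hub (am m) (bm m) (am_pos m) (am_le_bm m)). lra. }
  assert (Hcauchy : Cauchy_crit q).
  { intros eps Heps. destruct (Happrox (eps / 2) ltac:(lra)) as [N HN]. exists N.
    intros n m Hn Hm. unfold R_dist.
    destruct (exhaustion_mono N n Hn), (exhaustion_mono N m Hm).
    pose proof (Hnear _ _ n (am_pos N) (am_le_bm N) ltac:(auto) ltac:(auto)).
    pose proof (Hnear _ _ m (am_pos N) (am_le_bm N) ltac:(auto) ltac:(auto)).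
    fold (q N) in *. rewrite Rabs_minus_sym in H3.
    replace (q n - q m) with ((q n - q N) + (q N - q m)) by ring.
    eapply Rle_lt_trans; [apply Rabs_triang | lra]. }
  destruct (Rcomplete.R_complete q Hcauchy) as [l Hl]. exists l.
  intros eps Heps. destruct (Happrox (eps / 2) ltac:(lra)) as [N HN]. exists N.
  intros a b Ha HaN HbN. pose proof (am_le_bm N).
  destruct (exhaustion_covers a b Ha) as [N1 HN1].
  destruct (Hl (eps / 2) ltac:(lra)) as [N2 HN2].
  set (m := max N1 N2). destruct (HN1 m ltac:(unfold m; lia)).
  specialize (HN2 m ltac:(unfold m; lia)). unfold R_dist in HN2.
  pose proof (Hnear a b m Ha ltac:(lra) ltac:(auto) ltac:(auto)).
  pose proof (P_mono a (am N) (bm N) b Ha HaN (am_le_bm N) HbN).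
  replace (RInt (fun x => f (g x)) a b - l) with ((RInt (fun x => f (g x)) a b - q m) + (q m - l)) by ring.
  eapply Rle_lt_trans; [apply Rabs_triang | lra].
Qed.

Lemma improper_integral_exists : exists v, ImpInt_abs g v.
Proof.
  destruct (component_limit Re Re_le_Cnorm (fun a b Ha Hab => proj1 (Hint a b Ha Hab))) as [lr Hlr].
  destruct (component_limit Im Im_le_Cnorm (fun a b Ha Hab => proj1 (proj2 (Hint a b Ha Hab))))
    as [li Hli].
  exists (lr, li). split; [|split].
  - intros a b Ha Hab. destruct (Hint a b Ha Hab) as [I1 [I2 I3]].
    do 3 eexists. split; [|split]; apply RInt_is_iff, (RInt_correct (V := R_CompleteNormedModule)); eauto.
  - exists M. intros a b vn Ha Hab Hv. apply RInt_is_iff, (is_RInt_unique (V := R_CompleteNormedModule)) in Hv.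
    rewrite <- Hv. apply Hbnd; auto.
  - intros eps Heps. destruct (Hlr eps Heps) as [N1 HN1]. destruct (Hli eps Heps) as [N2 HN2].
    set (N := max N1 N2). destruct (exhaustion_mono N1 N ltac:(unfold N; lia)).
    destruct (exhaustion_mono N2 N ltac:(unfold N; lia)).
    exists (am N), (bm N). split; [apply am_pos|].
    intros a b vr vi Ha HaN HbN Hvr Hvi.
    apply RInt_is_iff, (is_RInt_unique (V := R_CompleteNormedModule)) in Hvr. apply RInt_is_iff, (is_RInt_unique (V := R_CompleteNormedModule)) in Hvi.
    subst vr vi. split; [apply HN1 | apply HN2]; auto; lra.
Qed.

End ImproperIntegral.

Lemma impint_window (g : R -> Cpx) (d1 d2 B1 B2 : R) : 0 < d1 -> 0 < d2 ->
  (forall a b, 0 < a -> a <= b -> exists vr vi vn, RInt_is (fun x => Re (g x)) a b vr /\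
     RInt_is (fun x => Im (g x)) a b vi /\ RInt_is (fun x => Cnorm (g x)) a b vn) ->
  exists a b vr vi, 0 < a /\ a <= b /\ a < d1 /\ a < d2 /\ B1 < b /\ B2 < b /\
    RInt_is (fun x => Re (g x)) a b vr /\ RInt_is (fun x => Im (g x)) a b vi.
Proof.
  intros Hd1 Hd2 Hint.
  set (a := Rmin d1 d2 / 2). set (b := Rmax (Rmax B1 B2) a + 1).
  assert (0 < Rmin d1 d2) by (apply Rmin_glb_lt; auto).
  pose proof (Rmin_l d1 d2). pose proof (Rmin_r d1 d2).
  pose proof (Rmax_l (Rmax B1 B2) a). pose proof (Rmax_r (Rmax B1 B2) a).
  pose proof (Rmax_l B1 B2). pose proof (Rmax_r B1 B2).
  assert (Hab : a <= b) by (unfold b; lra).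
  destruct (Hint a b ltac:(unfold a; lra) Hab) as [vr [vi [vn [R1 [R2 _]]]]].
  exists a, b, vr, vi. repeat split; auto; unfold a, b; lra.
Qed.

Lemma impint_unique (g : R -> Cpx) (v w : Cpx) : ImpInt_abs g v -> ImpInt_abs g w -> v = w.
Proof.
  intros [I1 [_ L1]] [_ [_ L2]].
  assert (Hclose : forall eps, 0 < eps -> Rabs (Re v - Re w) <= 2 * eps /\ Rabs (Im v - Im w) <= 2 * eps).
  { intros eps Heps. destruct (L1 eps Heps) as [d1 [B1 [Hd1 H1]]]. destruct (L2 eps Heps) as [d2 [B2 [Hd2 H2]]].
    destruct (impint_window g d1 d2 B1 B2 Hd1 Hd2 I1) as [a [b [vr [vi [Ha [_ [Ha1 [Ha2 [Hb1 [Hb2 [R1 R2]]]]]]]]]]].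
    destruct (H1 a b vr vi) as [E1 E2]; auto. destruct (H2 a b vr vi) as [E3 E4]; auto.
    split.
    - replace (Re v - Re w) with (- (vr - Re v) + (vr - Re w)) by ring.
      eapply Rle_trans; [apply Rabs_triang|]. rewrite Rabs_Ropp. lra.
    - replace (Im v - Im w) with (- (vi - Im v) + (vi - Im w)) by ring.
      eapply Rle_trans; [apply Rabs_triang|]. rewrite Rabs_Ropp. lra. }
  assert (Hzero : forall x, (forall eps, 0 < eps -> Rabs x <= 2 * eps) -> x = 0).
  { intros x Hx. destruct (Req_dec x 0) as [E|E]; auto.
    specialize (Hx (Rabs x / 4) ltac:(apply Rdiv_lt_0_compat; [apply Rabs_pos_lt|]; lra)).
    pose proof (Rabs_pos_lt x E). lra. }
  apply Cpx_eq.
  - assert (Re v - Re w = 0) by (apply Hzero; intros; apply Hclose; auto). lra.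
  - assert (Im v - Im w = 0) by (apply Hzero; intros; apply Hclose; auto). lra.
Qed.

Lemma impint_ext (g h : R -> Cpx) (v : Cpx) :
  (forall x, 0 < x -> g x = h x) -> ImpInt_abs g v -> ImpInt_abs h v.
Proof.
  intros E [I1 [[M HM] L]].
  assert (E' : forall a b (f : Cpx -> R) w, 0 < a -> a <= b ->
            RInt_is (fun x => f (h x)) a b w <-> RInt_is (fun x => f (g x)) a b w).
  { intros a b f w Ha Hab. rewrite !RInt_is_iff.
    split; apply is_RInt_ext; intros x Hx; rewrite Rmin_left, Rmax_right in Hx by lra;
      rewrite E; auto; lra. }
  split; [|split].
  - intros a b Ha Hab. destruct (I1 a b Ha Hab) as [vr [vi [vn [R1 [R2 R3]]]]].
    exists vr, vi, vn. split; [|split]; apply (E' a b _ _ Ha Hab); assumption.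
  - exists M. intros a b vn Ha Hab Hv. apply (E' a b _ _ Ha Hab) in Hv. eapply HM; eauto.
  - intros eps Heps. destruct (L eps Heps) as [d [B [Hd HL]]]. exists (Rmin d 1), (Rmax B 1).
    split; [apply Rmin_glb_lt; lra|].
    intros a b vr vi Ha Had HbB R1 R2.
    pose proof (Rmin_l d 1). pose proof (Rmin_r d 1). pose proof (Rmax_l B 1). pose proof (Rmax_r B 1).
    apply (E' a b _ _ Ha ltac:(lra)) in R1. apply (E' a b _ _ Ha ltac:(lra)) in R2.
    apply (HL a b); auto; lra.
Qed.

Lemma impint_value_bound (g : R -> Cpx) (v : Cpx) (K : R) : ImpInt_abs g v ->
  (forall a b vr vi, 0 < a -> a <= b -> RInt_is (fun x => Re (g x)) a b vr ->
     RInt_is (fun x => Im (g x)) a b vi -> Rabs vr <= K /\ Rabs vi <= K) ->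
  Rabs (Re v) <= K /\ Rabs (Im v) <= K.
Proof.
  intros [I1 [_ L]] HK.
  assert (Happrox : forall eps, 0 < eps -> Rabs (Re v) <= K + eps /\ Rabs (Im v) <= K + eps).
  { intros eps Heps. destruct (L eps Heps) as [d [B [Hd HL]]].
    destruct (impint_window g d d B B Hd Hd I1) as [a [b [vr [vi [Ha [Hab [Had [_ [HbB [_ [R1 R2]]]]]]]]]]].
    destruct (HL a b vr vi Ha Had HbB R1 R2) as [E1 E2].
    destruct (HK a b vr vi Ha Hab R1 R2) as [K1 K2].
    pose proof (Rabs_triang_inv (Re v) vr). pose proof (Rabs_triang_inv (Im v) vi).
    rewrite Rabs_minus_sym in E1, E2. split; lra. }
  split; apply Rle_plus_epsilon; intros eps Heps; apply Happrox; auto.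
Qed.

Lemma is_RInt_uniform_limit (F : R -> R) (FN : nat -> R -> R) (a b L : R) (SN err : nat -> R) :
  a <= b -> is_RInt F a b L -> (forall N, is_RInt (FN N) a b (SN N)) ->
  (forall N x, a <= x <= b -> Rabs (F x - FN N x) <= err N) -> is_lim_seq err 0 ->
  is_lim_seq SN L.
Proof.
  intros Hab HF HFN Herr Hlim. apply is_lim_seq_Reals. apply is_lim_seq_Reals in Hlim.
  intros eps Heps. set (C := b - a + 1).
  destruct (Hlim (eps / C) ltac:(apply Rdiv_lt_0_compat; unfold C; lra)) as [N0 HN0].
  exists N0. intros N HN. specialize (HN0 N HN). unfold R_dist in *. rewrite Rminus_0_r in HN0.
  rewrite Rabs_minus_sym.
  eapply Rle_lt_trans.
  { apply (is_RInt_bound (fun x => F x - FN N x) a b (L - SN N) (err N) Hab); [|apply Herr].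
    apply (is_RInt_minus (V := R_NormedModule)); auto. }
  assert (0 <= err N) by (eapply Rle_trans; [apply Rabs_pos | apply (Herr N a); lra]).
  apply Rle_lt_trans with (err N * C); [unfold C; nra|].
  replace eps with (eps / C * C) by (field; unfold C; lra).
  apply Rmult_lt_compat_r; [unfold C; lra | eapply Rle_lt_trans; [apply RRle_abs | exact HN0]].
Qed.

Lemma CI_uniform_limit (h : R -> Cpx) (hN : nat -> R -> Cpx) (a b : R) (J : Cpx)
  (I : nat -> Cpx) (err : nat -> R) : a <= b -> CI h a b J ->
  (forall N, CI (hN N) a b (Csum I N)) ->
  (forall N x, a <= x <= b -> Cnorm (Cadd (h x) (Copp (hN N x))) <= err N) ->
  is_lim_seq err 0 -> CS I J.
Proof.
  intros Hab [HJ1 HJ2] HN Herr Hlim.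
  assert (Hcomp : forall f : Cpx -> R, (forall z, Rabs (f z) <= Cnorm z) ->
            (forall z w, f (Cadd z w) = f z + f w) -> (forall z, f (Copp z) = - f z) ->
            is_RInt (fun x => f (h x)) a b (f J) ->
            (forall N, is_RInt (fun x => f (hN N x)) a b (f (Csum I N))) ->
            is_series (fun k => f (I k)) (f J)).
  { intros f Hf Hadd Hopp HfJ HfN. apply is_series_lim.
    apply (is_lim_seq_ext (fun N => f (Csum I N))); [intro N; symmetry; apply sum_f_R0_Csum, Hadd|].
    apply (is_RInt_uniform_limit (fun x => f (h x)) (fun N x => f (hN N x)) a b (f J)
             (fun N => f (Csum I N)) err Hab HfJ HfN); [|exact Hlim].
    intros N x Hx. eapply Rle_trans; [|apply (Herr N x Hx)].
    unfold Rminus. rewrite <- Hopp, <- Hadd. apply Hf. }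
  split.
  - apply (Hcomp Re Re_le_Cnorm (fun _ _ => eq_refl) (fun _ => eq_refl) HJ1). intro N; exact (proj1 (HN N)).
  - apply (Hcomp Im Im_le_Cnorm (fun _ _ => eq_refl) (fun _ => eq_refl) HJ2). intro N; exact (proj2 (HN N)).
Qed.

Lemma cpt_of_derive (f : R -> R) (x : R) : ex_derive f x -> continuity_pt f x.
Proof. intro H. apply continuity_pt_filterlim, (ex_derive_continuous (V := R_NormedModule)), H. Qed.

Lemma cpt_pos_ext (f h : R -> R) (x : R) :
  (forall y, 0 < y -> f y = h y) -> 0 < x -> continuity_pt f x -> continuity_pt h x.
Proof.
  intros E Hx Hf. apply continuity_pt_filterlim. apply (continuous_ext_loc _ f).
  - assert (Hp : 0 < x / 2) by lra. exists (mkposreal _ Hp). intros y Hy. apply E.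
    unfold ball in Hy; simpl in Hy; unfold AbsRing_ball, abs, minus, plus, opp in Hy; simpl in Hy.
    apply Rabs_def2 in Hy. lra.
  - apply continuity_pt_filterlim, Hf.
Qed.

Definition Ccont (h : R -> Cpx) (x : R) : Prop :=
  continuity_pt (fun y => Re (h y)) x /\ continuity_pt (fun y => Im (h y)) x.

Lemma Ccont_mul (h1 h2 : R -> Cpx) (x : R) :
  Ccont h1 x -> Ccont h2 x -> Ccont (fun y => Cmul (h1 y) (h2 y)) x.
Proof.
  intros [R1 I1] [R2 I2]. unfold Ccont, Cmul, Re, Im in *; simpl. split.
  - apply continuity_pt_minus; apply continuity_pt_mult; auto.
  - apply continuity_pt_plus; apply continuity_pt_mult; auto.
Qed.

Lemma Ccont_real (f : R -> R) (x : R) : continuity_pt f x -> Ccont (fun y => RtoC (f y)) x.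
Proof. intro H. split; [exact H | apply continuity_pt_const; intros ? ?; reflexivity]. Qed.

Lemma Ccont_Rcpow (z : Cpx) (x : R) : 0 < x -> Ccont (fun y => Rcpow y z) x.
Proof.
  intro Hx. split.
  - apply (cpt_pos_ext (fun y => exp (Re z * ln y) * cos (Im z * ln y))); auto;
      [intros; rewrite Rcpow_eq; reflexivity | apply cpt_of_derive; auto_derive; lra].
  - apply (cpt_pos_ext (fun y => exp (Re z * ln y) * sin (Im z * ln y))); auto;
      [intros; rewrite Rcpow_eq; reflexivity | apply cpt_of_derive; auto_derive; lra].
Qed.

Lemma Ccont_norm (h : R -> Cpx) (x : R) : Ccont h x -> continuity_pt (fun y => Cnorm (h y)) x.
Proof.
  intros [H1 H2]. unfold Cnorm.
  apply (continuity_pt_comp (fun y => Re (h y) * Re (h y) + Im (h y) * Im (h y)) sqrt).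
  - apply continuity_pt_plus; apply continuity_pt_mult; auto.
  - apply continuity_pt_sqrt. nra.
Qed.

Lemma Ccont_integrable (h : R -> Cpx) : (forall x, 0 < x -> Ccont h x) ->
  forall a b, 0 < a -> a <= b ->
  ex_RInt (fun x => Re (h x)) a b /\ ex_RInt (fun x => Im (h x)) a b /\
  ex_RInt (fun x => Cnorm (h x)) a b.
Proof.
  intros Hc a b Ha Hab. split; [|split]; apply ex_RInt_pos_cont; auto;
    intros x Hx; [apply Hc | apply Hc | apply Ccont_norm, Hc]; auto.
Qed.

(** ** The Gamma integrand [t^s e^(-t)] *)

Definition gam (s : Cpx) (t : R) : Cpx := Cmul (Rcpow t s) (RtoC (exp (- t))).

Lemma gam_norm (s : Cpx) (t : R) : Cnorm (gam s t) = Rpower t (Re s) * exp (- t).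
Proof.
  unfold gam, Rpower. rewrite Cnorm_mul, Cnorm_Rcpow, Cnorm_RtoC, Rabs_right by (left; apply exp_pos).
  reflexivity.
Qed.

Lemma gam_cont (s : Cpx) (t : R) : 0 < t -> Ccont (gam s) t.
Proof.
  intro Ht. apply Ccont_mul; [apply Ccont_Rcpow; auto|].
  apply Ccont_real, cpt_of_derive. auto_derive. auto.
Qed.

Lemma gam_norm_integrable (p a b : R) : 0 < a -> a <= b ->
  ex_RInt (fun t => Rpower t p * exp (- t)) a b.
Proof.
  intros Ha Hab. apply ex_RInt_pos_cont; auto. intros x Hx.
  apply cpt_of_derive. unfold Rpower. auto_derive. lra.
Qed.

Lemma Rpower_int_01 (p u : R) : -1 < p -> 0 < u -> u <= 1 ->
  is_RInt (fun t => Rpower t p) u 1 (Rpower 1 (p + 1) / (p + 1) - Rpower u (p + 1) / (p + 1)).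
Proof.
  intros Hp Hu Hu1.
  apply (is_RInt_derive (V := R_CompleteNormedModule) (fun t => Rpower t (p + 1) / (p + 1))).
  - intros x Hx. rewrite Rmin_left, Rmax_right in Hx by lra.
    unfold Rpower. auto_derive; [lra|].
    replace ((p + 1) * ln x) with (p * ln x + ln x) by ring. rewrite exp_plus, exp_ln by lra.
    field. lra.
  - intros x Hx. rewrite Rmin_left, Rmax_right in Hx by lra.
    apply continuity_pt_filterlim, cpt_of_derive. unfold Rpower. auto_derive. lra.
Qed.

Lemma inv_sq_int (K v : R) : 1 <= v -> is_RInt (fun t => K / (t * t)) 1 v (- K / v - - K / 1).
Proof.
  intros Hv. apply (is_RInt_derive (V := R_CompleteNormedModule) (fun t => - K / t)).
  - intros x Hx. rewrite Rmin_left, Rmax_right in Hx by lra. auto_derive; [lra|]. field. lra.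
  - intros x Hx. rewrite Rmin_left, Rmax_right in Hx by lra.
    apply continuity_pt_filterlim, cpt_of_derive. auto_derive. nra.
Qed.

Lemma exp_ge_pow (t : R) (m : nat) : 0 <= t -> t ^ m / INR (fact m) <= exp t.
Proof.
  intro Ht. rewrite <- (is_series_unique _ _ (exp_series t)).
  assert (Hnn : forall i, 0 <= / INR (fact i) * t ^ i).
  { intro i. apply Rmult_le_pos; [left; apply Rinv_0_lt_compat, INR_fact_lt_0 | apply pow_le; auto]. }
  eapply Rle_trans; [|apply (partial_le_Series _ m); auto; eexists; apply exp_series].
  destruct m; simpl; [lra|].
  pose proof (sum_f_R0_ge0 _ m Hnn). simpl in *. unfold Rdiv. lra.
Qed.

Lemma gam_tail_bound (p t : R) (m : nat) : 1 <= t -> p + 2 <= INR m ->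
  Rpower t p * exp (- t) <= INR (fact m) / (t * t).
Proof.
  intros Ht Hm. pose proof (ln_le 1 t ltac:(lra) Ht) as Hl. rewrite ln_1 in Hl.
  assert (T1 : Rpower t p <= exp ((INR m - 2) * ln t)) by (unfold Rpower; apply exp_le; nra).
  assert (T2 : exp ((INR m - 2) * ln t) = t ^ m / (t * t)).
  { replace ((INR m - 2) * ln t) with (INR m * ln t + - (ln t + ln t)) by ring.
    rewrite exp_plus, exp_INR_mul, exp_Ropp, exp_plus, exp_ln by lra. field. lra. }
  assert (Htm : 0 < t ^ m) by (apply pow_lt; lra). pose proof (INR_fact_lt_0 m).
  assert (T3 : exp (- t) <= INR (fact m) / t ^ m).
  { pose proof (exp_ge_pow t m ltac:(lra)). rewrite exp_Ropp.
    replace (INR (fact m) / t ^ m) with (/ (t ^ m / INR (fact m))) by (field; lra).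
    apply Rinv_le_contravar; auto. apply Rdiv_lt_0_compat; auto. }
  pose proof (exp_pos (p * ln t)). pose proof (exp_pos (- t)). unfold Rpower in *.
  apply Rle_trans with ((t ^ m / (t * t)) * (INR (fact m) / t ^ m)).
  - rewrite <- T2. apply Rmult_le_compat; lra.
  - right. field. split; lra.
Qed.

Lemma gam_bound (p : R) : -1 < p ->
  exists G, forall u v, 0 < u -> u <= v -> RInt (fun t => Rpower t p * exp (- t)) u v <= G.
Proof.
  intro Hp. destruct (INR_unbounded (p + 2)) as [m Hm].
  exists (/ (p + 1) + INR (fact m)). intros u v Hu Huv.
  set (f := fun t => Rpower t p * exp (- t)).
  set (u' := Rmin u 1). set (v' := Rmax v 1).
  assert (Hu' : 0 < u') by (unfold u'; apply Rmin_glb_lt; lra).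
  assert (Hu'1 : u' <= 1) by apply Rmin_r. assert (Hv'1 : 1 <= v') by apply Rmax_r.
  assert (Hf : forall t, 0 < t -> 0 <= f t <= Rpower t p).
  { intros t Ht. unfold f, Rpower. pose proof (exp_pos (p * ln t)). pose proof (exp_pos (- t)).
    assert (exp (- t) <= 1) by (rewrite <- exp_0; apply exp_le; lra). split; nra. }
  eapply Rle_trans.
  { apply (RInt_nonneg_mono f u' u v v'); auto; [intros; apply gam_norm_integrable; auto
    | intros; apply Hf; auto | apply Rmin_l | apply Rmax_l]. }
  rewrite <- (RInt_Chasles (V := R_CompleteNormedModule) f u' 1 v') by (apply gam_norm_integrable; lra).
  assert (I1 : RInt f u' 1 <= Rpower 1 (p + 1) / (p + 1) - Rpower u' (p + 1) / (p + 1)).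
  { apply (is_RInt_le f (fun t => Rpower t p) u' 1); auto.
    - apply (RInt_correct (V := R_CompleteNormedModule)), gam_norm_integrable; auto.
    - apply Rpower_int_01; auto.
    - intros x Hx. apply Hf. lra. }
  assert (I2 : RInt f 1 v' <= - INR (fact m) / v' - - INR (fact m) / 1).
  { apply (is_RInt_le f (fun t => INR (fact m) / (t * t)) 1 v'); auto.
    - apply (RInt_correct (V := R_CompleteNormedModule)), gam_norm_integrable; lra.
    - apply inv_sq_int; auto.
    - intros x Hx. apply gam_tail_bound; lra. }
  replace (Rpower 1 (p + 1)) with 1 in I1 by (unfold Rpower; rewrite ln_1, Rmult_0_r, exp_0; reflexivity).
  assert (0 < Rpower u' (p + 1) / (p + 1)) by (apply Rdiv_lt_0_compat; [apply exp_pos | lra]).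
  assert (0 < INR (fact m) / v') by (apply Rdiv_lt_0_compat; [apply INR_fact_lt_0 | lra]).
  unfold plus; simpl. unfold Rdiv in *. lra.
Qed.

Lemma gam_impint (s : Cpx) : -1 < Re s -> exists v, ImpInt_abs (gam s) v.
Proof.
  intro Hp. destruct (gam_bound (Re s) Hp) as [G HG].
  apply (improper_integral_exists (gam s) G).
  - apply Ccont_integrable. intros; apply gam_cont; auto.
  - intros a b Ha Hab. rewrite (RInt_ext _ (fun t => Rpower t (Re s) * exp (- t))).
    + apply HG; auto.
    + intros x Hx. apply gam_norm.
Qed.

Lemma CGamma_eq (s v : Cpx) : ImpInt_abs (gam s) v -> CGamma (Cadd s (RtoC 1)) = v.
Proof.
  intro H. unfold CGamma.
  replace (Cadd (Cadd s (RtoC 1)) (RtoC (-1))) with s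
    by (apply Cpx_eq; unfold Cadd, RtoC, Re, Im; simpl; ring).
  fold (gam s). apply (impint_unique (gam s)); auto.
  apply (epsilon_spec (inhabits (0, 0)) (fun v0 => ImpInt_abs (gam s) v0)). exists v; auto.
Qed.

Definition Gs (s : Cpx) (u v : R) : Cpx :=
  (RInt (fun t => Re (gam s t)) u v, RInt (fun t => Im (gam s t)) u v).

Lemma Gs_CI (s : Cpx) (u v : R) : 0 < u -> u <= v -> CI (gam s) u v (Gs s u v).
Proof.
  intros Hu Huv. destruct (Ccont_integrable (gam s) (fun t Ht => gam_cont s t Ht) u v Hu Huv)
    as [I1 [I2 _]].
  split; apply (RInt_correct (V := R_CompleteNormedModule)); auto.
Qed.

Lemma Gs_bound (s : Cpx) (Gp u v : R) :
  (forall u v, 0 < u -> u <= v -> RInt (fun t => Rpower t (Re s) * exp (- t)) u v <= Gp) ->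
  0 < u -> u <= v -> Rabs (Re (Gs s u v)) <= Gp /\ Rabs (Im (Gs s u v)) <= Gp.
Proof.
  intros HB Hu Huv. destruct (Gs_CI s u v Hu Huv) as [G1 G2].
  pose proof (RInt_correct (V := R_CompleteNormedModule) _ _ _ (gam_norm_integrable (Re s) u v Hu Huv)) as I.
  specialize (HB u v Hu Huv). split; eapply Rle_trans; try exact HB;
    [apply (is_RInt_abs_le _ _ u v _ _ Huv G1 I) | apply (is_RInt_abs_le _ _ u v _ _ Huv G2 I)];
    intros x Hx; rewrite <- gam_norm; [apply Re_le_Cnorm | apply Im_le_Cnorm].
Qed.

(** ** Termwise integration of [F(x) = sum_k A_k phi(x lam_k)] against [x^(s-1)] *)

Section KernelSum.
Variables (A : nat -> Cpx) (c : R).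
Hypothesis Hser : ex_series (fun k => Cnorm (A k) * lam c k).

Definition Tm (k : nat) (x : R) : Cpx := Cmul (A k) (RtoC (phi (x * lam c k))).

Definition Fcomp (f : Cpx -> R) (x : R) : R := Series (fun k => f (Tm k x)).
Definition FF (x : R) : Cpx := (Fcomp Re x, Fcomp Im x).

Definition tailS (n : nat) : R := Series (fun k => Cnorm (A (n + k)%nat) * lam c (n + k)).

Lemma Tm_bound (k : nat) (x : R) : 0 <= x -> Cnorm (Tm k x) <= Cnorm (A k) * lam c k * x.
Proof.
  intro Hx. unfold Tm. rewrite Cnorm_mul, Cnorm_RtoC. pose proof (lam_pos c k).
  destruct (phi_bound (x * lam c k)) as [P1 P2]; [nra|].
  rewrite Rabs_right by lra. pose proof (Cnorm_ge0 (A k)). nra.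
Qed.

Lemma Tm_component_ex (f : Cpx -> R) (Hf : forall z, Rabs (f z) <= Cnorm z) (x : R) :
  0 <= x -> ex_series (fun k => f (Tm k x)).
Proof.
  intro Hx. apply (ex_series_dominated _ (fun k => Cnorm (A k) * lam c k * x)).
  - intro k. eapply Rle_trans; [apply Hf | apply Tm_bound; auto].
  - apply (ex_series_scal_r x (fun k => Cnorm (A k) * lam c k)), Hser.
Qed.

Lemma FF_CS (x : R) : 0 <= x -> CS (fun k => Tm k x) (FF x).
Proof.
  intro Hx. split; apply Series_correct; apply Tm_component_ex; auto using Re_le_Cnorm, Im_le_Cnorm.
Qed.

Lemma tailS_ge0 (n : nat) : 0 <= tailS n.
Proof.
  apply Series_ge0; [apply (ex_series_incr_n (fun k => Cnorm (A k) * lam c k)); auto|].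
  intro k. pose proof (Cnorm_ge0 (A (n + k))). pose proof (lam_pos c (n + k)). nra.
Qed.

Lemma tailS_small (eps : R) : 0 < eps -> exists N, forall n, (N <= n)%nat -> tailS n < eps.
Proof.
  intro Heps. destruct (Series_tail_small _ Hser eps Heps) as [N HN]. exists N. intros n Hn.
  eapply Rle_lt_trans; [apply Rle_abs | exact (HN n Hn)].
Qed.

Lemma tailS_lim : is_lim_seq tailS 0.
Proof.
  apply is_lim_seq_Reals. intros eps Heps. destruct (tailS_small eps Heps) as [N HN].
  exists N. intros n Hn. unfold R_dist. rewrite Rminus_0_r, Rabs_right by (apply Rle_ge, tailS_ge0).
  apply HN; lia.
Qed.

Lemma Fcomp_partial_error (f : Cpx -> R) (Hf : forall z, Rabs (f z) <= Cnorm z) (x : R) (N : nat) :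
  0 <= x -> Rabs (Fcomp f x - sum_f_R0 (fun k => f (Tm k x)) N) <= x * tailS (S N).
Proof.
  intro Hx. unfold Fcomp. rewrite (Series_incr_n _ (S N)) by (lia || apply Tm_component_ex; auto).
  change (Init.Nat.pred (S N)) with N.
  replace (sum_f_R0 (fun k => f (Tm k x)) N + Series (fun k => f (Tm (S N + k)%nat x))
           - sum_f_R0 (fun k => f (Tm k x)) N) with (Series (fun k => f (Tm (S N + k)%nat x))) by ring.
  unfold tailS. rewrite Rmult_comm, <- Series_scal_r. apply Series_abs_le.
  - intro k. eapply Rle_trans; [apply Hf | apply Tm_bound; auto].
  - apply (ex_series_scal_r x (fun k => Cnorm (A (S N + k)%nat) * lam c (S N + k))).
    apply (ex_series_incr_n (fun k => Cnorm (A k) * lam c k)); auto.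
Qed.

Lemma FF_partial_error (x : R) (N : nat) : 0 <= x ->
  Cnorm (Cadd (FF x) (Copp (Csum (fun k => Tm k x) N))) <= 2 * x * tailS (S N).
Proof.
  intro Hx. eapply Rle_trans; [apply Cnorm_le_sum|].
  pose proof (Fcomp_partial_error Re Re_le_Cnorm x N Hx).
  pose proof (Fcomp_partial_error Im Im_le_Cnorm x N Hx).
  unfold FF, Cadd, Copp, Csum, Re, Im in *; simpl in *. unfold Rminus in *. lra.
Qed.

Lemma Tm_cont (k : nat) (x : R) : Ccont (Tm k) x.
Proof.
  apply Ccont_mul; [split; apply continuity_pt_const; intros ? ?; reflexivity|].
  apply Ccont_real, cpt_of_derive. unfold phi. auto_derive. auto.
Qed.

(** [F] is continuous on [(0, oo)], as a locally uniform limit of continuous functions. *)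
Lemma Fcomp_cont (f : Cpx -> R) (Hf : forall z, Rabs (f z) <= Cnorm z)
  (Hfc : forall k x, continuity_pt (fun y => f (Tm k y)) x) (x : R) :
  0 < x -> continuity_pt (Fcomp f) x.
Proof.
  intro Hx. assert (Hr : 0 < x / 2) by lra.
  apply (CVU_continuity (fun n y => sum_f_R0 (fun k => f (Tm k y)) n) _ x (mkposreal _ Hr)).
  - intros eps Heps. destruct (tailS_small (eps / (2 * x))) as [N HN]; [apply Rdiv_lt_0_compat; lra|].
    exists N. intros n y Hn Hy. unfold Boule in Hy; simpl in Hy. apply Rabs_def2 in Hy.
    eapply Rle_lt_trans; [apply Fcomp_partial_error; auto; lra|].
    specialize (HN (S n) ltac:(lia)). pose proof (tailS_ge0 (S n)).
    apply Rle_lt_trans with (2 * x * tailS (S n)); [apply Rmult_le_compat_r; lra|].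
    replace eps with (2 * x * (eps / (2 * x))) by (field; lra). apply Rmult_lt_compat_l; lra.
  - intros n y _. induction n; simpl; [apply Hfc | apply continuity_pt_plus; auto].
  - unfold Boule; simpl. rewrite Rminus_eq_0, Rabs_R0. lra.
Qed.

Lemma FF_cont (x : R) : 0 < x -> Ccont FF x.
Proof.
  intro Hx. split; apply Fcomp_cont; auto using Re_le_Cnorm, Im_le_Cnorm;
    intros; apply Tm_cont.
Qed.

(** The substitution [t = lam_k x] turns each term of [F(x) x^(s-1)] into a
    Gamma integrand: [Tm k x * x^(s-1) = A_k lam_k^(-s) * lam_k * gam s (lam_k x)]. *)
Lemma Tm_scaling (k : nat) (x : R) (s : Cpx) : 0 < x ->
  Cmul (Tm k x) (Rcpow x (Cadd s (RtoC (-1)))) =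
  Cmul (Cmul (A k) (Rcpow (lam c k) (Copp s))) (Cmul (RtoC (lam c k)) (gam s (lam c k * x))).
Proof.
  intro Hx. pose proof (lam_pos c k) as Hl. set (l := lam c k) in *.
  pose proof (Rcpow_opp_inv l s) as Hinv.
  unfold Tm, gam, phi. fold l.
  rewrite Rcpow_add, Rcpow_real, (Rcpow_mulbase l x) by auto.
  replace (exp (-1 * ln x)) with (/ x) by (rewrite <- exp_ln with (x := / x) by (apply Rinv_0_lt_compat; lra);
                                           rewrite ln_Rinv by lra; f_equal; ring).
  replace (exp (- (l * x))) with (exp (- (x * l))) by (f_equal; ring).
  set (e := exp (- (x * l))). set (Q' := Rcpow l (Copp s)) in *. set (Q := Rcpow l s) in *.
  set (X := Rcpow x s). to_C. change (Cmult Q' Q = Coquelicot.Complex.RtoC 1) in Hinv.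
  transitivity (Cmult (Cmult Q' Q) (Cmult (A k) (Cmult X (Cmult (Coquelicot.Complex.RtoC l)
                                                         (Coquelicot.Complex.RtoC e))))).
  - rewrite Hinv. apply Cpx_eq; unfold Cmult, Coquelicot.Complex.RtoC, Re, Im; simpl; field; lra.
  - match goal with |- ?l = ?r => change (@eq C l r) end. ring.
Qed.

Lemma Tm_CI (k : nat) (s : Cpx) (a b : R) : 0 < a -> a <= b ->
  CI (fun x => Cmul (Tm k x) (Rcpow x (Cadd s (RtoC (-1))))) a b
     (Cmul (Cmul (A k) (Rcpow (lam c k) (Copp s))) (Gs s (lam c k * a) (lam c k * b))).
Proof.
  intros Ha Hab. pose proof (lam_pos c k) as Hl.
  pose proof (Gs_CI s (lam c k * a) (lam c k * b) ltac:(nra) ltac:(nra)) as G.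
  apply CI_comp_lin, (CI_scal (Cmul (A k) (Rcpow (lam c k) (Copp s)))) in G.
  eapply CI_ext; [|exact G]. intros x Hx. rewrite Rmin_left in Hx by lra.
  rewrite Tm_scaling by lra. reflexivity.
Qed.

Lemma Rpower_between (p a b x : R) : 0 < a -> a <= x <= b -> Rpower x p <= Rpower a p + Rpower b p.
Proof.
  intros Ha Hx. pose proof (ln_le a x Ha (proj1 Hx)). pose proof (ln_le x b ltac:(lra) (proj2 Hx)).
  unfold Rpower. pose proof (exp_pos (p * ln a)). pose proof (exp_pos (p * ln b)).
  destruct (Rle_dec 0 p).
  - assert (exp (p * ln x) <= exp (p * ln b)) by (apply exp_le; nra). lra.
  - assert (exp (p * ln x) <= exp (p * ln a)) by (apply exp_le; nra). lra.
Qed.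

Lemma Csum_mul_r (u : nat -> Cpx) (w : Cpx) (N : nat) :
  Csum (fun k => Cmul (u k) w) N = Cmul (Csum u N) w.
Proof.
  induction N; [apply Cpx_eq; reflexivity|].
  change (Csum ?v (S N)) with (Cadd (Csum v N) (v (S N))). rewrite IHN.
  apply Cpx_eq; unfold Cadd, Cmul, Re, Im; simpl; ring.
Qed.

Lemma integrand_partial_error (s : Cpx) (a b x : R) (N : nat) : 0 < a -> a <= x <= b ->
  Cnorm (Cadd (Cmul (FF x) (Rcpow x (Cadd s (RtoC (-1)))))
              (Copp (Csum (fun k => Cmul (Tm k x) (Rcpow x (Cadd s (RtoC (-1))))) N)))
  <= 2 * tailS (S N) * (Rpower a (Re s) + Rpower b (Re s)).
Proof.
  intros Ha Hx. rewrite Csum_mul_r.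
  set (P := Rcpow x (Cadd s (RtoC (-1)))).
  replace (Cadd (Cmul (FF x) P) (Copp (Cmul (Csum (fun k => Tm k x) N) P)))
    with (Cmul (Cadd (FF x) (Copp (Csum (fun k => Tm k x) N))) P)
    by (apply Cpx_eq; unfold Cadd, Copp, Cmul, Re, Im; simpl; ring).
  rewrite Cnorm_mul. unfold P. rewrite Cnorm_Rcpow.
  assert (E : x * exp (Re (Cadd s (RtoC (-1))) * ln x) = Rpower x (Re s)).
  { unfold Rpower, Cadd, RtoC, Re, Im; simpl.
    replace ((fst s + -1) * ln x) with (fst s * ln x + - ln x) by ring.
    rewrite exp_plus, exp_Ropp, exp_ln by lra. field. lra. }
  pose proof (FF_partial_error x N ltac:(lra)). pose proof (tailS_ge0 (S N)).
  pose proof (Rpower_between (Re s) a b x Ha Hx).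
  pose proof (exp_pos (Re (Cadd s (RtoC (-1))) * ln x)). pose proof (Cnorm_ge0 (Cadd (FF x) (Copp (Csum (fun k => Tm k x) N)))).
  apply Rle_trans with (2 * x * tailS (S N) * exp (Re (Cadd s (RtoC (-1))) * ln x)).
  - apply Rmult_le_compat_r; lra.
  - replace (2 * x * tailS (S N) * exp (Re (Cadd s (RtoC (-1))) * ln x))
      with (2 * tailS (S N) * Rpower x (Re s)) by (rewrite <- E; ring).
    apply Rmult_le_compat_l; lra.
Qed.

Lemma FF_CI (s : Cpx) (a b : R) : 0 < a -> a <= b ->
  exists J, CI (fun x => Cmul (FF x) (Rcpow x (Cadd s (RtoC (-1))))) a b J /\
  CS (fun k => Cmul (Cmul (A k) (Rcpow (lam c k) (Copp s))) (Gs s (lam c k * a) (lam c k * b))) J.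
Proof.
  intros Ha Hab.
  set (h := fun x => Cmul (FF x) (Rcpow x (Cadd s (RtoC (-1))))).
  set (hN := fun N x => Csum (fun k => Cmul (Tm k x) (Rcpow x (Cadd s (RtoC (-1))))) N).
  set (I := fun k => Cmul (Cmul (A k) (Rcpow (lam c k) (Copp s))) (Gs s (lam c k * a) (lam c k * b))).
  set (err := fun N => 2 * tailS (S N) * (Rpower a (Re s) + Rpower b (Re s))).
  destruct (Ccont_integrable h (fun x Hx => Ccont_mul _ _ x (FF_cont x Hx) (Ccont_Rcpow _ x Hx))
              a b Ha Hab) as [Ire [Iim _]].
  set (J := (RInt (fun x => Re (h x)) a b, RInt (fun x => Im (h x)) a b) : Cpx).
  assert (HJ : CI h a b J) by (split; apply (RInt_correct (V := R_CompleteNormedModule)); auto).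
  assert (HN : forall N, CI (hN N) a b (Csum I N))
    by (intro N; apply (CI_finsum (fun k x => Cmul (Tm k x) (Rcpow x (Cadd s (RtoC (-1))))));
        intro; apply Tm_CI; auto).
  assert (Herr : forall N x, a <= x <= b -> Cnorm (Cadd (h x) (Copp (hN N x))) <= err N)
    by (intros N x Hx; exact (integrand_partial_error s a b x N Ha Hx)).
  assert (Hlim : is_lim_seq err 0).
  { replace (Finite 0) with (Rbar_mult (Finite 0) (2 * (Rpower a (Re s) + Rpower b (Re s))))
      by (simpl; f_equal; ring).
    apply (is_lim_seq_ext (fun N => tailS (S N) * (2 * (Rpower a (Re s) + Rpower b (Re s)))));
      [intro; unfold err; ring|].
    apply is_lim_seq_scal_r, (is_lim_seq_incr_1 tailS), tailS_lim. }
  exists J. split; [exact HJ|]. apply (CI_uniform_limit h hN a b J I err); auto.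
Qed.

End KernelSum.

(** ** The Mellin transform of [R_c] *)

Section Mellin.
Variables (a : nat -> Cpx) (c : R) (s : Cpx).
Hypothesis Hc : 0 < c.
(** absolute convergence of the Dirichlet series at [c] and at [-c Re s] *)
Hypothesis Hser : ex_series (fun k => Cnorm (a (S k)) * lam c k).
Hypothesis HserE : ex_series (fun k => Cnorm (a (S k)) * exp (c * Re s * ln (INR (S k)))).
Hypothesis Hs1 : -1 < Re s.

Definition AA (k : nat) : Cpx := a (S k).

(** The coefficients [a_(k+1) lam_k^(-s) = a_(k+1) (k+1)^(cs)] of [f(-cs)]. *)
Definition EE (k : nat) : Cpx := Cmul (AA k) (Rcpow (lam c k) (Copp s)).

Lemma Cnorm_EE (k : nat) : Cnorm (EE k) = Cnorm (a (S k)) * exp (c * Re s * ln (INR (S k))).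
Proof.
  unfold EE, AA. rewrite Cnorm_mul, Cnorm_Rcpow, ln_lam. do 2 f_equal. unfold Copp, Re; simpl. ring.
Qed.

Lemma ex_EE : ex_series (fun k => Cnorm (EE k)).
Proof. eapply ex_series_ext; [|exact HserE]. intro k. rewrite Cnorm_EE. reflexivity. Qed.

Lemma dirichlet_eq : exists D, CS EE D /\ dirichlet a (Cmul (RtoC (- c)) s) = D.
Proof.
  destruct (CS_abs EE ex_EE) as [D [HD _]]. exists D. split; auto.
  unfold dirichlet. apply Cseries_eq. eapply CS_ext; [|exact HD].
  intro k. unfold EE, AA. f_equal. rewrite !Rcpow_eq, ln_lam. unfold Copp, Cmul, RtoC, Re, Im; simpl.
  f_equal; f_equal; f_equal; ring.
Qed.

(** The integrand, in the form given by the expansion of [R_c]. *)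
Definition hh (x : R) : Cpx := Cmul (FF AA c x) (Rcpow x (Cadd s (RtoC (-1)))).

Lemma hh_integrable (u v : R) : 0 < u -> u <= v ->
  ex_RInt (fun x => Re (hh x)) u v /\ ex_RInt (fun x => Im (hh x)) u v /\
  ex_RInt (fun x => Cnorm (hh x)) u v.
Proof.
  apply Ccont_integrable. intros x Hx.
  apply Ccont_mul; [apply (FF_cont AA c Hser x Hx) | apply Ccont_Rcpow; auto].
Qed.

Definition Aabs (k : nat) : Cpx := RtoC (Cnorm (a (S k))).
Definition sre : Cpx := RtoC (Re s).

Lemma Hser_abs : ex_series (fun k => Cnorm (Aabs k) * lam c k).
Proof.
  eapply ex_series_ext; [|exact Hser]. intro k. unfold Aabs.
  rewrite Cnorm_RtoC, Rabs_right by (apply Rle_ge, Cnorm_ge0). reflexivity.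
Qed.

Lemma Cnorm_FF_le (x : R) : 0 <= x -> Cnorm (FF AA c x) <= Re (FF Aabs c x).
Proof.
  intro Hx.
  assert (E : forall k, Cnorm (Tm AA c k x) = Re (Tm Aabs c k x)).
  { intro k. unfold Tm, AA, Aabs. rewrite Cnorm_mul, Cnorm_RtoC, Rabs_right.
    - unfold Cmul, RtoC, Re, Im; simpl. ring.
    - apply Rle_ge, phi_bound. pose proof (lam_pos c k). nra. }
  assert (Ex : ex_series (fun k => Cnorm (Tm AA c k x))).
  { eapply ex_series_ext; [intro k; symmetry; apply E|].
    apply (Tm_component_ex Aabs c Hser_abs Re Re_le_Cnorm x Hx). }
  destruct (CS_abs _ Ex) as [l [Hl Hn]].
  rewrite (CS_unique _ _ _ (FF_CS AA c Hser x Hx) Hl).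
  rewrite (Series_ext _ _ E) in Hn. exact Hn.
Qed.

Lemma hh_norm_le (x : R) : 0 < x ->
  Cnorm (hh x) <= Re (Cmul (FF Aabs c x) (Rcpow x (Cadd sre (RtoC (-1))))).
Proof.
  intro Hx. unfold hh. rewrite Cnorm_mul, Cnorm_Rcpow.
  replace (Cadd sre (RtoC (-1))) with (RtoC (Re s + -1))
    by (apply Cpx_eq; unfold Cadd, sre, RtoC, Re, Im; simpl; ring).
  rewrite Rcpow_real. unfold Cmul at 1, RtoC, Re at 1 4, Im at 2; simpl.
  rewrite Rmult_0_r, Rminus_0_r.
  apply Rmult_le_compat_r; [left; apply exp_pos | apply Cnorm_FF_le; lra].
Qed.

Lemma SE_ge0 : 0 <= Series (fun k => Cnorm (EE k)).
Proof. apply Series_ge0; [apply ex_EE | intro; apply Cnorm_ge0]. Qed.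

Lemma hh_bounded : exists M, forall u v, 0 < u -> u <= v ->
  RInt (fun x => Cnorm (hh x)) u v <= M.
Proof.
  destruct (gam_bound (Re s) Hs1) as [Gp HGp].
  exists (Series (fun k => Cnorm (EE k)) * (2 * Gp)). intros u v Hu Huv.
  destruct (FF_CI Aabs c Hser_abs sre u v Hu Huv) as [J' [[CJ _] [SJ _]]].
  destruct (hh_integrable u v Hu Huv) as [_ [_ Inorm]].
  eapply Rle_trans.
  { apply (is_RInt_le _ _ u v _ _ Huv (RInt_correct (V := R_CompleteNormedModule) _ _ _ Inorm) CJ).
    intros x Hx. apply hh_norm_le. lra. }
  rewrite <- (is_series_unique _ _ SJ), <- Series_scal_r.
  apply Series_le_series; [| eexists; exact SJ | apply ex_series_scal_r, ex_EE].
  intro k. eapply Rle_trans; [eapply Rle_trans; [apply RRle_abs | apply Re_le_Cnorm]|].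
  rewrite Cnorm_mul. pose proof (lam_pos c k).
  replace (Cnorm (Cmul (Aabs k) (Rcpow (lam c k) (Copp sre)))) with (Cnorm (EE k)).
  - apply Rmult_le_compat_l; [apply Cnorm_ge0|].
    destruct (Gs_bound sre Gp (lam c k * u) (lam c k * v) HGp) as [B1 B2]; try nra.
    pose proof (Cnorm_le_sum (Gs sre (lam c k * u) (lam c k * v))). lra.
  - unfold EE, AA, Aabs, sre. rewrite !Cnorm_mul, !Cnorm_Rcpow, Cnorm_RtoC, Rabs_right
      by (apply Rle_ge, Cnorm_ge0). reflexivity.
Qed.

Section Limit.
Variables (D G : Cpx).
Hypothesis HD : CS EE D.
Hypothesis HG : ImpInt_abs (gam s) G.

Let dist_k (x1 x2 : R) (k : nat) : R :=
  Rabs (Re (Gs s (lam c k * x1) (lam c k * x2)) - Re G) +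
  Rabs (Im (Gs s (lam c k * x1) (lam c k * x2)) - Im G).

Lemma dist_k_bounded : exists Kb, 0 <= Kb /\
  forall x1 x2 k, 0 < x1 -> x1 <= x2 -> 0 <= dist_k x1 x2 k <= Kb.
Proof.
  destruct (gam_bound (Re s) Hs1) as [Gp HGp].
  assert (HGs : forall u v, 0 < u -> u <= v -> Rabs (Re (Gs s u v)) <= Gp /\ Rabs (Im (Gs s u v)) <= Gp)
    by (intros; apply Gs_bound; auto).
  destruct (impint_value_bound (gam s) G Gp HG) as [BG1 BG2].
  { intros u v vr vi Hu Huv R1 R2. destruct (Gs_CI s u v Hu Huv) as [G1 G2].
    apply RInt_is_iff, (is_RInt_unique (V := R_CompleteNormedModule)) in R1, R2.
    rewrite <- R1, <- R2. rewrite (is_RInt_unique _ _ _ _ G1), (is_RInt_unique _ _ _ _ G2).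
    apply HGs; auto. }
  exists (4 * Gp). split.
  - pose proof (Rabs_pos (Re G)). lra.
  - intros x1 x2 k Hx1 Hx12. pose proof (lam_pos c k).
    destruct (HGs (lam c k * x1) (lam c k * x2)) as [B1 B2]; try nra.
    unfold dist_k.
    pose proof (Rabs_pos (Re (Gs s (lam c k * x1) (lam c k * x2)) - Re G)).
    pose proof (Rabs_pos (Im (Gs s (lam c k * x1) (lam c k * x2)) - Im G)).
    pose proof (Rabs_triang (Re (Gs s (lam c k * x1) (lam c k * x2))) (- Re G)).
    pose proof (Rabs_triang (Im (Gs s (lam c k * x1) (lam c k * x2))) (- Im G)).
    rewrite Rabs_Ropp in *. unfold Rminus in *. lra.
Qed.

Lemma window_error (x1 x2 : R) (Kb : R) : 0 < x1 -> x1 <= x2 ->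
  (forall k, 0 <= dist_k x1 x2 k <= Kb) ->
  exists J, CI hh x1 x2 J /\ ex_series (fun k => Cnorm (EE k) * dist_k x1 x2 k) /\
    Rabs (Re J - Re (Cmul D G)) <= Series (fun k => Cnorm (EE k) * dist_k x1 x2 k) /\
    Rabs (Im J - Im (Cmul D G)) <= Series (fun k => Cnorm (EE k) * dist_k x1 x2 k).
Proof.
  intros Hx1 Hx12 HKb.
  destruct (FF_CI AA c Hser s x1 x2 Hx1 Hx12) as [J [HJ SJ]]. exists J. split; [exact HJ|].
  set (w := fun k => Cadd (Cmul (EE k) (Gs s (lam c k * x1) (lam c k * x2))) (Copp (Cmul (EE k) G))).
  assert (Hw : CS w (Cadd J (Copp (Cmul D G)))) by (apply CS_minus; [exact SJ | apply CS_scal_r, HD]).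
  assert (Hwb : forall k, Cnorm (w k) <= Cnorm (EE k) * dist_k x1 x2 k).
  { intro k. unfold w.
    replace (Cadd (Cmul (EE k) (Gs s (lam c k * x1) (lam c k * x2))) (Copp (Cmul (EE k) G)))
      with (Cmul (EE k) (Cadd (Gs s (lam c k * x1) (lam c k * x2)) (Copp G)))
      by (apply Cpx_eq; unfold Cadd, Cmul, Copp, Re, Im; simpl; ring).
    rewrite Cnorm_mul. apply Rmult_le_compat_l; [apply Cnorm_ge0 | apply Cnorm_le_sum]. }
  assert (Eb : ex_series (fun k => Cnorm (EE k) * dist_k x1 x2 k)).
  { apply (ex_series_dominated _ (fun k => Cnorm (EE k) * Kb)).
    - intro k. pose proof (Cnorm_ge0 (EE k)). destruct (HKb k).
      rewrite Rabs_right by nra. apply Rmult_le_compat_l; auto.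
    - apply ex_series_scal_r, ex_EE. }
  destruct Hw as [Hw1 Hw2]. split; [exact Eb|].
  assert (Ecn : ex_series (fun k => Cnorm (w k))).
  { apply (ex_series_dominated _ _ (fun k => Rle_trans _ _ _
             (Req_le _ _ (Rabs_right _ (Rle_ge _ _ (Cnorm_ge0 _)))) (Hwb k)) Eb). }
  assert (Sw : Series (fun k => Cnorm (w k)) <= Series (fun k => Cnorm (EE k) * dist_k x1 x2 k))
    by (apply Series_le_series; auto).
  split.
  - replace (Re J - Re (Cmul D G)) with (Re (Cadd J (Copp (Cmul D G))))
      by (unfold Cadd, Copp, Re; simpl; ring).
    rewrite <- (is_series_unique _ _ Hw1). eapply Rle_trans; [|exact Sw].
    apply Series_abs_le; auto. intro; apply Re_le_Cnorm.
  - replace (Im J - Im (Cmul D G)) with (Im (Cadd J (Copp (Cmul D G))))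
      by (unfold Cadd, Copp, Im; simpl; ring).
    rewrite <- (is_series_unique _ _ Hw2). eapply Rle_trans; [|exact Sw].
    apply Series_abs_le; auto. intro; apply Im_le_Cnorm.
Qed.

(** If the truncated Gamma integrals over windows [[u,v]] with [u < d1],
    [B1 < v] are [eps1]-close to [G], then so is the [k]-th scaled window
    as soon as [x1 < d1] and [B1 < lam_k x2] (recall [lam_k <= 1]). *)
Lemma dist_k_small (eps1 d1 B1 x1 x2 : R) (k : nat) :
  (forall u v vr vi, 0 < u -> u < d1 -> B1 < v ->
     RInt_is (fun t => Re (gam s t)) u v vr -> RInt_is (fun t => Im (gam s t)) u v vi ->
     Rabs (vr - Re G) < eps1 /\ Rabs (vi - Im G) < eps1) ->
  0 < x1 -> x1 < d1 -> x1 <= x2 -> B1 < lam c k * x2 -> dist_k x1 x2 k < 2 * eps1.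
Proof.
  intros HL Hx1 Hx1d Hx12 Hx2. pose proof (lam_pos c k). pose proof (lam_le1 c k ltac:(lra)).
  destruct (Gs_CI s (lam c k * x1) (lam c k * x2)) as [Q1 Q2]; try nra.
  destruct (HL (lam c k * x1) (lam c k * x2) _ _ ltac:(nra) ltac:(nra) Hx2
              (proj2 (RInt_is_iff _ _ _ _) Q1) (proj2 (RInt_is_iff _ _ _ _) Q2)).
  unfold dist_k. lra.
Qed.

Lemma beyond_scaled (l B y : R) : 0 < l <= 1 -> Rmax B 1 / l < y -> B < l * y /\ 1 < y.
Proof.
  intros Hl Hy. pose proof (Rmax_l B 1). pose proof (Rmax_r B 1).
  apply (Rmult_lt_compat_l l) in Hy; [|lra].
  replace (l * (Rmax B 1 / l)) with (Rmax B 1) in Hy by (field; lra). nra.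
Qed.

(** As [x1 -> 0] and [x2 -> oo], the windows [[lam_k x1, lam_k x2]] exhaust
    [(0, oo)] for each fixed [k], so by dominated convergence (for series) the
    integral of [hh] over [[x1,x2]] tends to [D G]. *)
Lemma hh_limit : forall eps, 0 < eps -> exists d B, 0 < d /\
  forall x1 x2 vr vi, 0 < x1 -> x1 < d -> B < x2 ->
    RInt_is (fun x => Re (hh x)) x1 x2 vr -> RInt_is (fun x => Im (hh x)) x1 x2 vi ->
    Rabs (vr - Re (Cmul D G)) < eps /\ Rabs (vi - Im (Cmul D G)) < eps.
Proof.
  intros eps Heps. destruct dist_k_bounded as [Kb [HKb0 HKb]].
  destruct (series_uniformly_small (fun k => Cnorm (EE k) * Kb)
              (ex_series_scal_r Kb _ ex_EE) eps Heps) as [N [delta [Hdelta Hsmall]]].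
  set (SE := Series (fun k => Cnorm (EE k))). pose proof SE_ge0 as HSE. fold SE in HSE.
  set (eps1 := delta / (2 * (SE + 1))).
  assert (He1 : 0 < eps1) by (unfold eps1; apply Rdiv_lt_0_compat; lra).
  destruct HG as [_ [_ LG]]. destruct (LG eps1 He1) as [d1 [B1 [Hd1 HL1]]].
  pose proof (lam_pos c N). pose proof (lam_le1 c N ltac:(lra)).
  exists (Rmin d1 1), (Rmax B1 1 / lam c N). split; [apply Rmin_glb_lt; lra|].
  intros x1 x2 vr vi Hx1 Hx1d Hx2 Hvr Hvi.
  pose proof (Rmin_l d1 1). pose proof (Rmin_r d1 1).
  destruct (beyond_scaled (lam c N) B1 x2 ltac:(lra) Hx2) as [HB1 Hx2'].
  assert (Hx12 : x1 <= x2) by lra.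
  destruct (window_error x1 x2 Kb Hx1 Hx12 (fun k => HKb x1 x2 k Hx1 Hx12)) as [J [[CJ1 CJ2] [_ [E1 E2]]]].
  apply RInt_is_iff, (is_RInt_unique (V := R_CompleteNormedModule)) in Hvr, Hvi.
  rewrite (is_RInt_unique _ _ _ _ CJ1) in Hvr. rewrite (is_RInt_unique _ _ _ _ CJ2) in Hvi.
  subst vr vi.
  assert (Hsum : Series (fun k => Cnorm (EE k) * dist_k x1 x2 k) < eps).
  { apply Hsmall.
    - intro k. pose proof (Cnorm_ge0 (EE k)). destruct (HKb x1 x2 k Hx1 Hx12). split; nra.
    - intros k Hk. assert (Hlk : lam c N <= lam c k) by (apply lam_anti; lia || lra).
      pose proof (term_le_Series _ k ex_EE (fun _ => Cnorm_ge0 _)) as Hk1. cbv beta in Hk1.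
      pose proof (dist_k_small eps1 d1 B1 x1 x2 k HL1 Hx1 ltac:(lra) Hx12 ltac:(nra)).
      destruct (HKb x1 x2 k Hx1 Hx12). pose proof (Cnorm_ge0 (EE k)).
      apply Rle_trans with ((SE + 1) * (2 * eps1)); [apply Rmult_le_compat; fold SE in Hk1; lra|].
      right. unfold eps1. field. lra. }
  split; lra.
Qed.

End Limit.

Lemma hh_impint (D G : Cpx) : CS EE D -> ImpInt_abs (gam s) G -> ImpInt_abs hh (Cmul D G).
Proof.
  intros HD HG. destruct hh_bounded as [M HM]. split; [|split].
  - intros u v Hu Huv. destruct (hh_integrable u v Hu Huv) as [I1 [I2 I3]].
    do 3 eexists. split; [|split]; apply RInt_is_iff, (RInt_correct (V := R_CompleteNormedModule)); eauto.
  - exists M. intros u v vn Hu Huv Hv.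
    apply RInt_is_iff, (is_RInt_unique (V := R_CompleteNormedModule)) in Hv. rewrite <- Hv. apply HM; auto.
  - apply hh_limit; auto.
Qed.

End Mellin.

Theorem theorem2 (a : nat -> Cpx) (sigma c : R)
  (Habs_cv : forall s : R, sigma < s ->
     exists l, infinite_sum (fun k => Cnorm (a (S k)) * Rpower (INR (S k)) (- s)) l)
  (Habs_dv : forall s : R, s < sigma ->
     ~ exists l, infinite_sum (fun k => Cnorm (a (S k)) * Rpower (INR (S k)) (- s)) l)
  (Hc0 : 0 < c) (Hcs : sigma < c)
  (s : Cpx) (Hs1 : -1 < Re s) (Hs2 : Re s < - sigma / c) :
  ImpInt_abs (fun x => Cmul (Rc a c x) (Rcpow x (Cadd s (RtoC (-1)))))
             (Cmul (dirichlet a (Cmul (RtoC (- c)) s)) (CGamma (Cadd s (RtoC 1)))).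
Proof.
  (* absolute convergence at [c] and at [-c Re s], both to the right of [sigma] *)
  assert (Hser : ex_series (fun k => Cnorm (a (S k)) * lam c k)).
  { destruct (Habs_cv c Hcs) as [l Hl]. exists l. apply is_series_Reals. exact Hl. }
  assert (Hright : sigma < - c * Re s).
  { apply (Rmult_lt_compat_l c) in Hs2; auto.
    replace (c * (- sigma / c)) with (- sigma) in Hs2 by (field; lra). lra. }
  assert (HserE : ex_series (fun k => Cnorm (a (S k)) * exp (c * Re s * ln (INR (S k))))).
  { destruct (Habs_cv _ Hright) as [l Hl]. exists l. apply is_series_Reals in Hl.
    eapply is_series_ext; [|exact Hl]. intro k. unfold Rpower. do 3 f_equal. ring. }
  destruct (dirichlet_eq a c s HserE) as [D [HD ->]].
  destruct (gam_impint s Hs1) as [G HG]. rewrite (CGamma_eq s G HG).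
  (* on [(0, oo)] the integrand is [hh], by the expansion of [R_c] *)
  apply (impint_ext (hh a c s)); [|apply hh_impint; auto].
  intros x Hx. unfold hh. f_equal.
  apply (CS_unique _ _ _ (FF_CS (AA a) c Hser x ltac:(lra))), Rc_expand; auto; lra.
Qed.
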